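(* Let $T\subseteq{}^{<\omega_1}\omega_1$ be a tree (closed under initial segments, ordered by $\subsetneq$) of cardinality $\aleph_1$ with no uncountable branch. Then the forcing notion $\mathbb P(T)$ satisfies the countable chain condition.
   Context: For an ordinal $\gamma<\omega_1$, ${\rm ht}(\gamma)$ is the unique $\alpha$ with $\gamma\in[\omega\alpha,\omega\alpha+\omega)$. For $\eta\in{}^{<\omega_1}\omega_1$, $\lg(\eta)$ is its length. A weak embedding is a map $f$ with $x<y\Rightarrow f(x)<f(y)$. The forcing $\mathbb P(T)$ consists of all $p=(u^p,v^p,<_p,f^p,c^p)$ such that: (1) $u^p\subseteq T$ and $v^p\subseteq\omega_1$ are finite and $\langle\rangle\in u^p$; (2) $u^p$ is closed under intersections (longest common initial segments); (3) $<_p$ is a partial order on $v^p$; (4) $f^p$ is a surjective weak embedding from $(u^p,\subsetneq)$ onto $(v^p,<_p)$; (5) ${\rm ht}(f^p(\eta))=\lg(\eta)$ for every $\eta\in u^p$; (6) $c^p:v^p\to\omega$ satisfies $\alpha<_p\beta\Rightarrow c^p(\alpha)\ne c^p(\beta)$. The order is coordinatewise inclusion: $p\le q$ iff $u^p\subseteq u^q$, $v^p\subseteq v^q$, $<_p\subseteq<_q$, $f^p\subseteq f^q$, $c^p\subseteq c^q$. *)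

(* omega_1 is modelled abstractly: any strict well-order
   (W, lt) which is total, uncountable, and all of whose proper initial
   segments are countable (such a W is isomorphic to omega_1). *)
From Stdlib Require Import List.
Set Implicit Arguments.

Definition countable {X : Type} (A : X -> Prop) : Prop :=
  exists g : X -> nat, forall x y, A x -> A y -> g x = g y -> x = y.

Definition finite {X : Type} (A : X -> Prop) : Prop :=
  exists l : list X, forall x, A x <-> In x l.

Section Omega1.
Variable W : Type.
Variable lt : W -> W -> Prop.

Definition le (x y : W) : Prop := lt x y \/ x = y.

Definition is_omega1 : Prop :=
  well_founded lt /\
  (forall x y z, lt x y -> lt y z -> lt x z) /\
  (forall x y, lt x y \/ x = y \/ lt y x) /\
  ~ countable (fun _ : W => True) /\
  (forall a : W, countable (fun x => lt x a)).

(* delta is 0 or a limit ordinal: it has no immediate predecessor *)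
Definition lim0 (d : W) : Prop :=
  ~ exists x, lt x d /\ ~ exists y, lt x y /\ lt y d.

(* ht g = a  iff  g in [omega*a, omega*a + omega), i.e. the set of
   0-or-limit ordinals <= g (= {omega*b | b <= a}) has order type a+1. *)
Definition ht_rel (g a : W) : Prop :=
  exists h : W -> W,
    (forall d, le d g -> lim0 d -> le (h d) a) /\
    (forall d d', le d g -> lim0 d -> le d' g -> lim0 d' -> lt d d' ->
        lt (h d) (h d')) /\
    (forall b, le b a -> exists d, le d g /\ lim0 d /\ h d = b).

(* elements of ^{<omega_1} omega_1: partial maps W -> W whose domain is a
   proper initial segment {x | x < alpha}; alpha is the length *)
Definition sq := W -> option W.

Definition lg_rel (s : sq) (a : W) : Prop :=
  forall x, s x <> None <-> lt x a.

Definition is_seq (s : sq) : Prop := exists a, lg_rel s a.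

Definition prefix (s t : sq) : Prop := forall x, s x <> None -> t x = s x.

Definition sprefix (s t : sq) : Prop := prefix s t /\ s <> t.

Definition empty_seq : sq := fun _ => None.

Definition is_meet (s t r : sq) : Prop :=
  forall x,
    ((forall y, le y x -> s y = t y) -> r x = s x) /\
    (~ (forall y, le y x -> s y = t y) -> r x = None).

Definition is_tree (T : sq -> Prop) : Prop :=
  (forall s, T s -> is_seq s) /\
  (forall s t, T t -> is_seq s -> prefix s t -> T s).

Definition card_aleph1 (T : sq -> Prop) : Prop :=
  exists e : W -> sq,
    (forall x, T (e x)) /\
    (forall x y, e x = e y -> x = y) /\
    (forall s, T s -> exists x, e x = s).

Definition no_uncountable_branch (T : sq -> Prop) : Prop :=
  forall B : sq -> Prop,
    (forall s, B s -> T s) ->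
    (forall s t, B s -> B t -> prefix s t \/ prefix t s) ->
    countable B.

(* a condition p = (u, v, <_p, f, c); f and c given by their graphs *)
Record cond := Cond {
  cu : sq -> Prop;
  cv : W -> Prop;
  clt : W -> W -> Prop;
  cf : sq -> W -> Prop;
  cc : W -> nat -> Prop
}.

Definition is_cond (T : sq -> Prop) (p : cond) : Prop :=
  (forall s, cu p s -> T s) /\ finite (cu p) /\ finite (cv p) /\
  cu p empty_seq /\
  (forall s t, cu p s -> cu p t -> exists r, is_meet s t r /\ cu p r) /\
  (forall a b, clt p a b -> cv p a /\ cv p b) /\
  (forall a, ~ clt p a a) /\
  (forall a b d, clt p a b -> clt p b d -> clt p a d) /\
  (forall s a, cf p s a -> cu p s /\ cv p a) /\
  (forall s a b, cf p s a -> cf p s b -> a = b) /\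
  (forall s, cu p s -> exists a, cf p s a) /\
  (forall a, cv p a -> exists s, cf p s a) /\
  (forall s t a b, sprefix s t -> cf p s a -> cf p t b -> clt p a b) /\
  (forall s a, cf p s a -> forall l, lg_rel s l -> ht_rel a l) /\
  (forall a n, cc p a n -> cv p a) /\
  (forall a n m, cc p a n -> cc p a m -> n = m) /\
  (forall a, cv p a -> exists n, cc p a n) /\
  (forall a b n m, clt p a b -> cc p a n -> cc p b m -> n <> m).

(* p <= q : q extends p *)
Definition cle (p q : cond) : Prop :=
  (forall s, cu p s -> cu q s) /\
  (forall a, cv p a -> cv q a) /\
  (forall a b, clt p a b -> clt q a b) /\
  (forall s a, cf p s a -> cf q s a) /\
  (forall a n, cc p a n -> cc q a n).

Definition compatible (T : sq -> Prop) (p q : cond) : Prop :=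
  exists r, is_cond T r /\ cle p r /\ cle q r.

Definition ccc (T : sq -> Prop) : Prop :=
  forall A : cond -> Prop,
    (forall p, A p -> is_cond T p) ->
    (forall p q, A p -> A q -> p <> q -> ~ compatible T p q) ->
    countable A.

End Omega1.

From Stdlib Require Import List Arith Lia Classical ClassicalEpsilon FunctionalExtensionality.
From Stdlib Require Import Cantor FinFun Relations.
From mathcomp Require ssreflect ssrfun ssrbool boolp classical_sets filter.
Import ListNotations.

(* Suppose an uncountable antichain exists.  Thin it to an uncountable family [J] of conditions
   of one finite type (sizes, order, colours, and which point each node is sent to) forming a
   Delta-system: every node or point coordinate is either constant on [J] (the root) or has
   countable fibres.  Root nodes are sent to root points, because each level [ht = l] of
   [omega_1] is countable.  Two members of [J] whose free nodes are pairwise incomparable and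
   whose free parts are disjoint are compatible: amalgamate them, giving each meet of a free node
   of one with a free node of the other a fresh point of the right height and a fresh colour.
   So for a fixed [a], all but countably many incompatible [x] have a free node of [a] below a
   free node of [x].  Pick an ultrafilter on [J] extending the co-countable filter; each [a]
   chooses coordinates [(i, j)] such that [u_i(a)] is below [u_j(x)] for ultrafilter-many [x].
   For fixed [(i, j)] the nodes [u_i(a)] are pairwise comparable, hence form a countable branch
   of [T], and as [i] is free only countably many [a] choose [(i, j)]: [J] is countable. *)

Lemma countable_subset {X} (A B : X -> Prop) :
  (forall x, B x -> A x) -> countable A -> countable B.
Proof. intros H [g Hg]. exists g. intros x y Bx By; apply Hg; auto. Qed.

Lemma countable_empty {X} (A : X -> Prop) : (forall x, ~ A x) -> countable A.
Proof. intros H. exists (fun _ => 0). intros x y Ax; exfalso; exact (H x Ax). Qed.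

Lemma countable_singleton {X} (a : X) : countable (fun x => x = a).
Proof. exists (fun _ => 0). intros; congruence. Qed.

Lemma countable_inj {X Y} (A : X -> Prop) (B : Y -> Prop) (f : X -> Y) :
  (forall x, A x -> B (f x)) -> (forall x y, A x -> A y -> f x = f y -> x = y) ->
  countable B -> countable A.
Proof.
  intros H1 H2 [g Hg]. exists (fun x => g (f x)). intros x y Ax Ay E.
  apply H2; auto.
Qed.

Lemma countable_nat (A : nat -> Prop) : countable A.
Proof. exists (fun n => n). auto. Qed.

Lemma countable_image {X Y} (A : X -> Prop) (f : X -> Y) :
  countable A -> countable (fun y => exists x, A x /\ f x = y).
Proof.
  intros [g Hg].
  exists (fun y => match excluded_middle_informative (exists x, A x /\ f x = y) with
                   | left H => g (proj1_sig (constructive_indefinite_description _ H))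
                   | right _ => 0 end).
  intros y1 y2 H1 H2.
  destruct (excluded_middle_informative (exists x, A x /\ f x = y1)) as [e1|]; [|contradiction].
  destruct (excluded_middle_informative (exists x, A x /\ f x = y2)) as [e2|]; [|contradiction].
  destruct (constructive_indefinite_description _ e1) as [x1 [Ax1 Fx1]].
  destruct (constructive_indefinite_description _ e2) as [x2 [Ax2 Fx2]]. simpl.
  intros E. assert (x1 = x2) by (apply Hg; auto). congruence.
Qed.

Lemma to_nat_inj (a b c d : nat) : to_nat (a, b) = to_nat (c, d) -> a = c /\ b = d.
Proof.
  intros E. assert (E2 : of_nat (to_nat (a, b)) = of_nat (to_nat (c, d))) by now rewrite E.
  rewrite !cancel_of_to in E2. now inversion E2.
Qed.

Lemma countable_nat_union {X} (A : nat -> X -> Prop) :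
  (forall n, countable (A n)) -> countable (fun x => exists n, A n x).
Proof.
  intros H.
  set (g := fun n => proj1_sig (constructive_indefinite_description _ (H n))).
  assert (Hg : forall n x y, A n x -> A n y -> g n x = g n y -> x = y).
  { intros n. unfold g. now destruct (constructive_indefinite_description _ (H n)). }
  set (idx := fun x => match excluded_middle_informative (exists n, A n x) with
                       | left e => proj1_sig (constructive_indefinite_description _ e)
                       | right _ => 0 end).
  assert (Hidx : forall x, (exists n, A n x) -> A (idx x) x).
  { intros x e. unfold idx. destruct (excluded_middle_informative (exists n, A n x)); [|contradiction].
    now destruct (constructive_indefinite_description _ _). }
  exists (fun x => to_nat (idx x, g (idx x) x)).
  intros x y Hx Hy E. apply to_nat_inj in E. destruct E as [E1 E2].
  apply Hidx in Hx. apply Hidx in Hy. rewrite E1 in Hx, E2. apply (Hg (idx y)); auto.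
Qed.

Lemma countable_union {X I} (C : I -> Prop) (A : I -> X -> Prop) :
  countable C -> (forall i, C i -> countable (A i)) ->
  countable (fun x => exists i, C i /\ A i x).
Proof.
  intros [gC HgC] H.
  apply countable_subset with (A := fun x => exists n, exists i, C i /\ gC i = n /\ A i x).
  { intros x [i [Ci Ai]]. exists (gC i), i. auto. }
  apply countable_nat_union. intros n.
  destruct (classic (exists i, C i /\ gC i = n)) as [[i [Ci Ei]]|N].
  - apply countable_subset with (A := A i); [|now apply H].
    intros x [j [Cj [Ej Aj]]]. assert (i = j) by (apply HgC; auto; congruence). now subst.
  - apply countable_empty. intros x [j [Cj [Ej _]]]. eauto.
Qed.

Lemma countable_or {X} (A B : X -> Prop) :
  countable A -> countable B -> countable (fun x => A x \/ B x).
Proof.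
  intros HA HB.
  apply countable_subset with (A := fun x => exists n : nat, match n with 0 => A x | _ => B x end).
  - intros x [Ax|Bx]; [exists 0|exists 1]; auto.
  - apply countable_nat_union. intros [|n]; auto.
Qed.

Lemma countable_In {X} (l : list X) : countable (fun x => In x l).
Proof.
  induction l as [|a l IH].
  - now apply countable_empty.
  - apply countable_subset with (A := fun x => x = a \/ In x l).
    + intros x [E|I]; auto.
    + apply countable_or; auto using countable_singleton.
Qed.

Lemma countable_union_list {X I} (l : list I) (A : I -> X -> Prop) :
  (forall i, In i l -> countable (A i)) -> countable (fun x => exists i, In i l /\ A i x).
Proof. intros H. apply countable_union; auto using countable_In. Qed.

Lemma countable_union_lt {X} (n : nat) (A : nat -> X -> Prop) :
  (forall i, i < n -> countable (A i)) -> countable (fun x => exists i, i < n /\ A i x).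
Proof.
  intros H. apply countable_subset with (A := fun x => exists i, In i (seq 0 n) /\ A i x).
  - intros x [i [Hi Ai]]. exists i. split; auto. apply in_seq; lia.
  - apply countable_union_list. intros i Hi. apply in_seq in Hi. apply H; lia.
Qed.

Lemma pigeonhole_countable {X Y} (J : X -> Prop) (C : Y -> Prop) (k : X -> Y) :
  ~ countable J -> countable C -> (forall x, J x -> C (k x)) ->
  exists y, C y /\ ~ countable (fun x => J x /\ k x = y).
Proof.
  intros HJ HC Hk. apply NNPP. intros N. apply HJ.
  apply countable_subset with (A := fun x => exists y, C y /\ J x /\ k x = y).
  - intros x Jx. exists (k x). auto.
  - apply countable_union; auto. intros y Cy. apply NNPP. intros N2. apply N. eauto.
Qed.

Lemma pigeonhole_nat {X} (J : X -> Prop) (k : X -> nat) :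
  ~ countable J -> exists n, ~ countable (fun x => J x /\ k x = n).
Proof.
  intros HJ.
  destruct (pigeonhole_countable J (fun _ => True) k HJ (countable_nat _) (fun _ _ => I)) as [n [_ H]].
  eauto.
Qed.

Lemma uncountable_inhabited {X} (J : X -> Prop) : ~ countable J -> exists x, J x.
Proof. intros H. apply NNPP. intros N. apply H. apply countable_empty. firstorder. Qed.

Lemma uncountable_diff {X} (J C : X -> Prop) :
  ~ countable J -> countable C -> ~ countable (fun x => J x /\ ~ C x).
Proof.
  intros HJ HC N. apply HJ. apply countable_subset with (A := fun x => (J x /\ ~ C x) \/ C x).
  - intros x Jx. destruct (classic (C x)); auto.
  - now apply countable_or.
Qed.

Definition fibre_dichotomy {X Y} (J : X -> Prop) (g : X -> Y) :=
  (exists c, forall x, J x -> g x = c) \/ (forall y, countable (fun x => J x /\ g x = y)).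

Lemma fibre_dichotomy_subset {X Y} (J J' : X -> Prop) (g : X -> Y) :
  (forall x, J' x -> J x) -> fibre_dichotomy J g -> fibre_dichotomy J' g.
Proof.
  intros H [[c Hc]|Hc]; [left; exists c; auto|right]. intros y.
  apply countable_subset with (A := fun x => J x /\ g x = y); [firstorder|auto].
Qed.

Lemma fibre_dichotomy_refine {X Y} (J : X -> Prop) (g : X -> Y) : ~ countable J ->
  exists J', (forall x, J' x -> J x) /\ ~ countable J' /\ fibre_dichotomy J' g.
Proof.
  intros HJ. destruct (classic (exists y, ~ countable (fun x => J x /\ g x = y))) as [[y Hy]|N].
  - exists (fun x => J x /\ g x = y). split; [firstorder|split; auto]. left. exists y. firstorder.
  - exists J. split; auto. split; auto. right. intros y. apply NNPP. intros N2. apply N. eauto.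
Qed.

Lemma fibre_dichotomy_refine_list {X Y} (L : list (X -> Y)) (J : X -> Prop) : ~ countable J ->
  exists J', (forall x, J' x -> J x) /\ ~ countable J' /\ forall g, In g L -> fibre_dichotomy J' g.
Proof.
  revert J. induction L as [|g L IH]; intros J HJ.
  - exists J. simpl. split; [auto|split; [auto|tauto]].
  - destruct (fibre_dichotomy_refine J g HJ) as [J1 [S1 [U1 T1]]].
    destruct (IH J1 U1) as [J2 [S2 [U2 T2]]].
    exists J2. split; auto. split; auto. intros h [E|I]; auto. subst h.
    eapply fibre_dichotomy_subset; eauto.
Qed.

Lemma fibre_dichotomy_nat {X} (J : X -> Prop) (g : X -> nat) : ~ countable J ->
  fibre_dichotomy J g -> exists c, forall x, J x -> g x = c.
Proof.
  intros HJ [H|H]; auto. exfalso. destruct (pigeonhole_nat J g HJ) as [n Hn]. apply Hn; auto.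
Qed.

Module Ultrafilter.
Import ssreflect ssrfun ssrbool boolp classical_sets filter.

Lemma extend (X : Type) (F : (X -> Prop) -> Prop) :
  F (fun _ => True) ->
  (forall A B, F A -> F B -> F (fun x => A x /\ B x)) ->
  (forall A B : X -> Prop, (forall x, A x -> B x) -> F A -> F B) ->
  (forall A, F A -> exists x, A x) ->
  exists U : (X -> Prop) -> Prop,
    (forall A, F A -> U A) /\
    (forall A B, U A -> U B -> U (fun x => A x /\ B x)) /\
    (forall A, U A -> exists x, A x) /\
    (forall A, U A \/ U (fun x => ~ A x)).
Proof.
move=> HT HI HS HE.
have FF : ProperFilter (F : set_system X).
  split.
  - move=> /HE [x] //.
  - split.
    + have -> : (setT : set X) = (fun _ => True) by [].
      exact: HT.
    + move=> A B FA FB; exact: HI.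
    + move=> A B AB; exact: HS.
have [U [UU FU]] := ultraFilterLemma FF.
exists U; split; first by move=> A; apply: FU.
split; first by move=> A B UA UB; exact: (filterI UA UB).
split; first by move=> A UA; exact: (filter_ex UA).
by move=> A; have := in_ultra_setVsetC A UU.
Qed.

End Ultrafilter.

Lemma ultrafilter_finite_cover {X I} (U : (X -> Prop) -> Prop)
  (UI : forall A B, U A -> U B -> U (fun x => A x /\ B x))
  (UE : forall A, U A -> exists x, A x)
  (UC : forall A, U A \/ U (fun x => ~ A x))
  (l : list I) (S : I -> X -> Prop) (B : X -> Prop) :
  U B -> (forall x, B x -> exists i, In i l /\ S i x) -> exists i, In i l /\ U (S i).
Proof.
  revert B. induction l as [|a l IH]; intros B HB Hcov.
  - destruct (UE B HB) as [x Bx]. now destruct (Hcov x Bx) as [i [[] _]].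
  - destruct (UC (S a)) as [H|H]; [exists a; simpl; auto|].
    destruct (IH (fun x => B x /\ ~ S a x)) as [i [Ii Ui]].
    + now apply UI.
    + intros x [Bx Nx]. destruct (Hcov x Bx) as [i [[E|Ii] Si]]; [subst; contradiction|eauto].
    + exists i. simpl; auto.
Qed.

Section ListIndex.
Variable A : Type.

Definition eq_dec_classic (x y : A) : {x = y} + {x <> y} := excluded_middle_informative (x = y).

Fixpoint index_of (x : A) (l : list A) : nat :=
  match l with [] => 0 | y :: l => if eq_dec_classic x y then 0 else S (index_of x l) end.

Lemma index_of_lt x l : In x l -> index_of x l < length l.
Proof.
  induction l as [|a l IH]; simpl; [tauto|]. destruct (eq_dec_classic x a); [lia|].
  intros [E|H]; [congruence|]. specialize (IH H); lia.
Qed.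

Lemma nth_index_of x l d : In x l -> nth (index_of x l) l d = x.
Proof.
  induction l as [|a l IH]; simpl; [tauto|]. destruct (eq_dec_classic x a); auto.
  intros [E|H]; [congruence|auto].
Qed.

Lemma index_of_inj x y l : In x l -> In y l -> index_of x l = index_of y l -> x = y.
Proof.
  induction l as [|a l IH]; simpl; [tauto|].
  destruct (eq_dec_classic x a), (eq_dec_classic y a); try congruence.
  intros [E|H1] [E2|H2] E3; try congruence. injection E3; auto.
Qed.

Lemma finite_NoDup (P : A -> Prop) : finite P -> exists l, NoDup l /\ forall x, P x <-> In x l.
Proof.
  intros [l Hl]. exists (nodup eq_dec_classic l). split; [apply NoDup_nodup|].
  intros x. rewrite nodup_In. auto.
Qed.

Lemma finite_subset (P Q : A -> Prop) : finite P -> (forall x, Q x -> P x) -> finite Q.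
Proof.
  intros [l Hl] H.
  exists (filter (fun x => if excluded_middle_informative (Q x) then true else false) l).
  intros x. rewrite filter_In.
  destruct (excluded_middle_informative (Q x)); split; intros; try tauto.
  - split; auto. now apply Hl, H.
  - now destruct H0.
Qed.

End ListIndex.
Arguments index_of {A}.

Lemma finite_image2 {A B C} (P : A -> Prop) (Q : B -> Prop) (f : A -> B -> C) :
  finite P -> finite Q -> finite (fun z => exists a b, P a /\ Q b /\ z = f a b).
Proof.
  intros [l1 H1] [l2 H2]. exists (map (fun ab => f (fst ab) (snd ab)) (list_prod l1 l2)).
  intros z. rewrite in_map_iff. split.
  - intros [a [b [Pa [Qb E]]]]. exists (a, b). split; auto. apply in_prod; [apply H1|apply H2]; auto.
  - intros [[a b] [E I]]. apply in_prod_iff in I. exists a, b. simpl in E. firstorder.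
Qed.

Lemma finite_or {A} (P Q : A -> Prop) : finite P -> finite Q -> finite (fun x => P x \/ Q x).
Proof. intros [l1 H1] [l2 H2]. exists (l1 ++ l2). intros x. rewrite in_app_iff. firstorder. Qed.

Lemma In_pair_functional {X Y} (P : list (X * Y)) x y y' :
  NoDup (map fst P) -> In (x, y) P -> In (x, y') P -> y = y'.
Proof.
  induction P as [|[a b] P IH]; simpl; [tauto|]. intros N. inversion N as [|? ? Na Nl]; subst.
  intros [E|I1] [E2|I2].
  - congruence.
  - inversion E; subst. exfalso. apply Na. apply in_map_iff. exists (x, y'); auto.
  - inversion E2; subst. exfalso. apply Na. apply in_map_iff. exists (x, y); auto.
  - apply IH; auto.
Qed.

Lemma In_pair_injective {X Y} (P : list (X * Y)) x x' y :
  NoDup (map snd P) -> In (x, y) P -> In (x', y) P -> x = x'.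
Proof.
  induction P as [|[a b] P IH]; simpl; [tauto|]. intros N. inversion N as [|? ? Na Nl]; subst.
  intros [E|I1] [E2|I2].
  - congruence.
  - inversion E; subst. exfalso. apply Na. apply in_map_iff. exists (x', y); auto.
  - inversion E2; subst. exfalso. apply Na. apply in_map_iff. exists (x, y); auto.
  - apply IH; auto.
Qed.

Lemma le_list_max x l : In x l -> x <= list_max l.
Proof.
  induction l as [|a l IH]; simpl; [tauto|]. intros [E|H]; [subst; lia|]. specialize (IH H); lia.
Qed.

Section Omega1.
Variable W : Type.
Variable lt : W -> W -> Prop.
Hypothesis Hw : is_omega1 lt.

Lemma lt_wf : well_founded lt. Proof. apply Hw. Qed.
Lemma lt_trans x y z : lt x y -> lt y z -> lt x z. Proof. apply Hw. Qed.
Lemma lt_total x y : lt x y \/ x = y \/ lt y x. Proof. apply Hw. Qed.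
Lemma W_uncountable : ~ countable (fun _ : W => True). Proof. apply Hw. Qed.
Lemma lt_countable a : countable (fun x => lt x a). Proof. apply Hw. Qed.

Lemma lt_irrefl x : ~ lt x x.
Proof. induction (lt_wf x) as [x _ IH]. intros H. apply (IH x H H). Qed.
Lemma lt_asym x y : lt x y -> ~ lt y x.
Proof. intros H1 H2. apply (lt_irrefl x). eapply lt_trans; eauto. Qed.
Lemma le_refl x : le lt x x. Proof. now right. Qed.
Lemma le_trans x y z : le lt x y -> le lt y z -> le lt x z.
Proof. unfold le. intros [H1|H1] [H2|H2]; subst; auto. left; eapply lt_trans; eauto. Qed.
Lemma lt_le_trans x y z : lt x y -> le lt y z -> lt x z.
Proof. intros H [H2|H2]; subst; auto. eapply lt_trans; eauto. Qed.
Lemma le_lt_trans x y z : le lt x y -> lt y z -> lt x z.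
Proof. intros [H|H] H2; subst; auto. eapply lt_trans; eauto. Qed.
Lemma not_lt_le x y : ~ lt x y -> le lt y x.
Proof. intros H. destruct (lt_total x y) as [A|[A|A]]; [contradiction| |]; unfold le; auto. Qed.
Lemma le_not_lt x y : le lt x y -> ~ lt y x.
Proof. intros [H|H] H2; subst. apply (lt_asym _ _ H H2). apply (lt_irrefl _ H2). Qed.
Lemma le_antisym x y : le lt x y -> le lt y x -> x = y.
Proof. intros [H|H] H2; auto. exfalso. apply (le_not_lt _ _ H2 H). Qed.

Lemma least_exists (P : W -> Prop) :
  (exists x, P x) -> exists x, P x /\ forall y, P y -> le lt x y.
Proof.
  intros [x Px]. apply NNPP. intros N.
  assert (forall z, ~ P z).
  { intros z. induction (lt_wf z) as [z _ IH]. intros Pz. apply N. exists z. split; auto.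
    intros y Py. apply not_lt_le. intros H. apply (IH y H Py). }
  eapply H; eauto.
Qed.

Lemma le_countable x : countable (fun y => le lt y x).
Proof.
  apply countable_subset with (A := fun y => lt y x \/ y = x).
  - intros y [H|H]; auto.
  - apply countable_or; auto using lt_countable, countable_singleton.
Qed.

Lemma countable_bounded (S : W -> Prop) : countable S -> exists b, forall s, S s -> lt s b.
Proof.
  intros HS. apply NNPP. intros N. apply W_uncountable.
  apply countable_subset with (A := fun y => exists s, S s /\ le lt y s).
  - intros y _. apply NNPP. intros N2. apply N. exists y. intros s Ss. apply NNPP. intros N3.
    apply N2. exists s. split; auto. apply not_lt_le; auto.
  - apply countable_union; auto. intros s _. apply le_countable.
Qed.

Lemma succ_exists x : exists y, lt x y /\ forall z, lt x z -> le lt y z.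
Proof.
  destruct (countable_bounded (fun s => s = x)) as [b Hb]; [apply countable_singleton|].
  apply (least_exists (fun z => lt x z)). exists b; auto.
Qed.

Definition succ x := proj1_sig (constructive_indefinite_description _ (succ_exists x)).

Lemma succ_lt x : lt x (succ x).
Proof. exact (proj1 (proj2_sig (constructive_indefinite_description _ (succ_exists x)))). Qed.

Lemma succ_least x z : lt x z -> le lt (succ x) z.
Proof. exact (proj2 (proj2_sig (constructive_indefinite_description _ (succ_exists x))) z). Qed.

Lemma succ_not_lim0 x : ~ lim0 lt (succ x).
Proof.
  intros H. apply H. exists x. split; [apply succ_lt|]. intros [y [H1 H2]].
  apply (le_not_lt _ _ (succ_least _ _ H1) H2).
Qed.

Fixpoint succ_iter (n : nat) (x : W) : W :=
  match n with 0 => x | S n => succ (succ_iter n x) end.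

Lemma succ_iter_le n x : le lt x (succ_iter n x).
Proof.
  induction n; simpl; [apply le_refl|]. eapply le_trans; eauto. left; apply succ_lt.
Qed.

Lemma succ_iter_lt n m x : n < m -> lt (succ_iter n x) (succ_iter m x).
Proof. induction 1; simpl; [apply succ_lt|]. eapply lt_trans; eauto. apply succ_lt. Qed.

Lemma succ_iter_inj n m x : succ_iter n x = succ_iter m x -> n = m.
Proof.
  intros E. destruct (Nat.lt_total n m) as [H|[H|H]]; auto;
  apply (succ_iter_lt _ _ x) in H; rewrite E in H; exfalso; eapply lt_irrefl; eauto.
Qed.

Lemma lim0_above b : exists e, lt b e /\ lim0 lt e.
Proof.
  destruct (countable_bounded (fun y => exists n, True /\ succ_iter n b = y)) as [c Hc].
  { apply countable_image, countable_nat. }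
  destruct (least_exists (fun x => forall n, lt (succ_iter n b) x)) as [e [H1 H2]].
  { exists c. intros n. apply Hc. eauto. }
  exists e. split; [apply (H1 0)|].
  intros [x [Hx N]]. destruct (classic (forall n, lt (succ_iter n b) x)) as [A|A].
  - apply (le_not_lt _ _ (H2 x A) Hx).
  - apply not_all_ex_not in A. destruct A as [n A]. apply not_lt_le in A.
    apply N. exists (succ_iter (S n) b). split.
    + eapply le_lt_trans; eauto. apply succ_iter_lt; auto.
    + apply H1.
Qed.

Definition height_witness (g a : W) (h : W -> W) : Prop :=
  (forall d, le lt d g -> lim0 lt d -> le lt (h d) a) /\
  (forall d d', le lt d g -> lim0 lt d -> le lt d' g -> lim0 lt d' -> lt d d' ->
      lt (h d) (h d')) /\
  (forall b, le lt b a -> exists d, le lt d g /\ lim0 lt d /\ h d = b).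

Lemma ht_rel_witness g a : ht_rel lt g a <-> exists h, height_witness g a h.
Proof. unfold ht_rel, height_witness. tauto. Qed.

Definition lim0_top (g d : W) : Prop :=
  le lt d g /\ lim0 lt d /\ forall e, le lt e g -> lim0 lt e -> le lt e d.

Lemma height_witness_le {g a h d d'} : height_witness g a h ->
  le lt d g -> lim0 lt d -> le lt d' g -> lim0 lt d' -> le lt d d' -> le lt (h d) (h d').
Proof. intros [_ [H _]] ? ? ? ? [L|L]; subst; [left; auto|apply le_refl]. Qed.

Lemma height_witness_top {g a h} : height_witness g a h -> exists d, lim0_top g d /\ h d = a.
Proof.
  intros HH. pose proof HH as [H1 [H2 H3]].
  destruct (H3 a (le_refl a)) as [d [D1 [D2 D3]]]. exists d. repeat split; auto.
  intros e E1 E2. apply not_lt_le. intros L. specialize (H2 _ _ D1 D2 E1 E2 L).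
  specialize (H1 _ E1 E2). rewrite D3 in H2. apply (le_not_lt _ _ H1 H2).
Qed.

Lemma strictly_increasing_ge (k : W -> W) l :
  (forall b b', le lt b' l -> lt b b' -> lt (k b) (k b')) -> forall b, le lt b l -> le lt b (k b).
Proof.
  intros Hk b. induction (lt_wf b) as [b _ IH]. intros Hb. apply not_lt_le. intros L.
  assert (Hkb : le lt (k b) l) by (left; eapply lt_le_trans; eauto).
  specialize (IH _ L Hkb). specialize (Hk _ _ Hb L). apply (le_not_lt _ _ IH Hk).
Qed.

(* If [d < d'], then [h' o h^-1] is strictly increasing on [[0, l]], so it maps [l] to
   something [>= l]; but it maps [l] to [h' d < h' d' = l]. *)
Lemma lim0_top_not_lt g l h d g' h' d' :
  height_witness g l h -> lim0_top g d -> height_witness g' l h' -> le lt d' g' -> lim0 lt d' ->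
  h' d' = l -> ~ lt d d'.
Proof.
  intros HH [Dg [Dl Dt]] HH' Dg' Dl' Dh' L.
  pose proof HH as [H1 [H2 H3]]. pose proof HH' as [H1' [H2' H3']].
  set (k := fun b => match excluded_middle_informative (exists e, le lt e g /\ lim0 lt e /\ h e = b) with
          | left E => h' (proj1_sig (constructive_indefinite_description _ E)) | right _ => b end).
  assert (Hk : forall b, le lt b l -> exists e, le lt e g /\ lim0 lt e /\ h e = b /\ k b = h' e).
  { intros b Hb. unfold k. destruct (excluded_middle_informative _) as [E|E].
    - destruct (constructive_indefinite_description _ E) as [e He]. simpl. exists e. tauto.
    - exfalso. apply E. auto. }
  assert (Hg' : forall e, le lt e g -> lim0 lt e -> le lt e g' /\ lt e d').
  { intros e E1 E2. assert (lt e d') by (apply le_lt_trans with d; auto). split; auto.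
    left. apply lt_le_trans with d'; auto. }
  assert (Inc : forall b b', le lt b' l -> lt b b' -> lt (k b) (k b')).
  { intros b b' Hb' Lb. assert (Hb : le lt b l) by (left; eapply lt_le_trans; eauto).
    destruct (Hk b Hb) as [e [E1 [E2 [E3 E4]]]]. destruct (Hk b' Hb') as [e' [E1' [E2' [E3' E4']]]].
    rewrite E4, E4'. destruct (Hg' e E1 E2), (Hg' e' E1' E2').
    apply H2'; auto. apply NNPP. intros N. apply not_lt_le in N.
    pose proof (height_witness_le HH E1' E2' E1 E2 N) as X. rewrite E3, E3' in X.
    apply (le_not_lt _ _ X Lb). }
  pose proof (strictly_increasing_ge k l Inc l (le_refl l)) as Ge.
  destruct (Hk l (le_refl l)) as [e [E1 [E2 [E3 E4]]]]. destruct (Hg' e E1 E2) as [G1 G2].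
  specialize (H2' _ _ G1 E2 Dg' Dl' G2). rewrite <- E4, Dh' in H2'. apply (le_not_lt _ _ Ge H2').
Qed.

Lemma lim0_top_unique {g l h d g' h' d'} :
  height_witness g l h -> lim0_top g d -> h d = l ->
  height_witness g' l h' -> lim0_top g' d' -> h' d' = l -> d = d'.
Proof.
  intros HH Td Hd HH' Td' Hd'. pose proof Td as [D1 [D2 _]]. pose proof Td' as [D1' [D2' _]].
  destruct (lt_total d d') as [L|[L|L]]; auto; exfalso.
  - exact (lim0_top_not_lt g l h d g' h' d' HH Td HH' D1' D2' Hd' L).
  - exact (lim0_top_not_lt g' l h' d' g h d HH' Td' HH D1 D2 Hd L).
Qed.

Lemma level_countable l : countable (fun a => ht_rel lt a l).
Proof.
  destruct (classic (exists a, ht_rel lt a l)) as [[a0 Ha0]|N]; [|apply countable_empty; firstorder].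
  apply ht_rel_witness in Ha0. destruct Ha0 as [h0 H0]. destruct (height_witness_top H0) as [d0 [T0 E0]].
  apply countable_subset with (A := fun y => exists n, True /\ succ_iter n d0 = y);
    [|apply countable_image, countable_nat].
  intros a Ha. apply ht_rel_witness in Ha. destruct Ha as [h Hh].
  destruct (height_witness_top Hh) as [d [Td Ed]].
  assert (d = d0) by exact (lim0_top_unique Hh Td Ed H0 T0 E0). subst d.
  destruct Td as [D1 [_ D4]].
  assert (Reach : forall x, le lt d0 x -> le lt x a -> exists n, succ_iter n d0 = x).
  { intros x. induction (lt_wf x) as [x _ IH]. intros X1 X2.
    destruct X1 as [X1|X1]; [|subst; exists 0; auto].
    destruct (classic (lim0 lt x)) as [Lx|Lx].
    { exfalso. apply (le_not_lt _ _ (D4 x X2 Lx) X1). }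
    apply NNPP in Lx. destruct Lx as [y [Y1 Y2]].
    assert (Dy : le lt d0 y) by (apply not_lt_le; intros L; apply Y2; exists d0; auto).
    destruct (IH y Y1 Dy) as [n Hn]; [left; eapply lt_le_trans; eauto|].
    exists (S n). simpl. rewrite Hn. apply le_antisym.
    - apply succ_least; auto.
    - apply not_lt_le. intros L. apply Y2. exists (succ y). split; auto. apply succ_lt. }
  destruct (Reach a D1 (le_refl _)) as [n Hn]. eauto.
Qed.

Definition level_base (d l : W) := lim0 lt d /\ ht_rel lt d l.

Lemma height_witness_self_top {d l h} :
  height_witness d l h -> lim0 lt d -> lim0_top d d /\ h d = l.
Proof.
  intros HH Ld. destruct (height_witness_top HH) as [t [[T1 [T2 T3]] T4]].
  assert (t = d) by (apply le_antisym; auto; apply T3; auto; apply le_refl). subst.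
  repeat split; auto.
Qed.

Lemma level_base_unique d d' l : level_base d l -> level_base d' l -> d = d'.
Proof.
  intros [L1 H1] [L2 H2]. apply ht_rel_witness in H1. apply ht_rel_witness in H2.
  destruct H1 as [h H1], H2 as [h' H2].
  destruct (height_witness_self_top H1 L1), (height_witness_self_top H2 L2).
  exact (lim0_top_unique H1 H H0 H2 H3 H4).
Qed.

Lemma height_witness_restrict {d l h e} :
  height_witness d l h -> lim0 lt e -> le lt e d -> height_witness e (h e) h.
Proof.
  intros HH Le Ed. pose proof HH as [H1 [H2 H3]]. split; [|split].
  - intros e' E1 E2. eapply height_witness_le; eauto. eapply le_trans; eauto.
  - intros a b A1 A2 B1 B2 L. apply H2; auto; eapply le_trans; eauto.
  - intros b Hb. destruct (H3 b) as [e' [E1 [E2 E3]]]; [eapply le_trans; eauto|].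
    exists e'. repeat split; auto. apply not_lt_le. intros L. subst b.
    pose proof (H2 _ _ Ed Le E1 E2 L). apply (le_not_lt _ _ Hb H).
Qed.

Section LevelBaseStep.
Variable l : W.
Variable D : W -> W.
Hypothesis HD : forall l', lt l' l -> level_base (D l') l'.

Lemma base_below l' e : lt l' l -> lim0 lt e -> le lt e (D l') ->
  exists l'', le lt l'' l' /\ e = D l''.
Proof.
  intros L' Le Ee. destruct (HD l' L') as [B1 B2]. apply ht_rel_witness in B2.
  destruct B2 as [h' H']. pose proof (height_witness_restrict H' Le Ee) as Hs.
  assert (He : le lt (h' e) l') by (destruct H' as [X _]; apply X; auto).
  exists (h' e). split; auto. apply (level_base_unique _ _ (h' e)).
  - split; auto. apply ht_rel_witness. eauto.
  - apply HD. eapply le_lt_trans; eauto.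
Qed.

Lemma bases_increasing l1 l2 : lt l1 l2 -> lt l2 l -> lt (D l1) (D l2).
Proof.
  intros L12 L2. destruct (HD l2 L2) as [B1 B2]. apply ht_rel_witness in B2.
  destruct B2 as [h2 H2]. destruct (height_witness_self_top H2 B1) as [_ T1].
  pose proof H2 as [_ [_ S3]]. destruct (S3 l1) as [e [X1 [X2 X3]]]; [left; auto|].
  assert (e = D l1).
  { apply (level_base_unique _ _ l1); [|apply HD; eapply lt_trans; eauto].
    split; auto. apply ht_rel_witness. exists h2. rewrite <- X3. eapply height_witness_restrict; eauto. }
  subst e. destruct X1 as [X1|X1]; auto. exfalso. rewrite X1, T1 in X3. subst.
  apply (lt_irrefl _ L12).
Qed.

Lemma bases_injective l1 l2 : lt l1 l -> lt l2 l -> D l1 = D l2 -> l1 = l2.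
Proof.
  intros A B E. destruct (lt_total l1 l2) as [C|[C|C]]; auto; exfalso.
  - pose proof (bases_increasing _ _ C B). rewrite E in H. apply (lt_irrefl _ H).
  - pose proof (bases_increasing _ _ C A). rewrite E in H. apply (lt_irrefl _ H).
Qed.

Variable d : W.
Hypothesis Hd_lim0 : lim0 lt d.
Hypothesis Hd_above : forall l', lt l' l -> lt (D l') d.
Hypothesis Hd_least : forall e, lim0 lt e -> (forall l', lt l' l -> lt (D l') e) -> le lt d e.

Lemma below_sup_base e : lim0 lt e -> lt e d -> exists l', lt l' l /\ e = D l'.
Proof.
  intros Le Ed.
  assert (exists l', lt l' l /\ ~ lt (D l') e) as [l' [L1 L2]].
  { apply NNPP. intros N. apply (le_not_lt d e); auto. apply Hd_least; auto.
    intros l' L'. apply NNPP. intros N2. apply N. eauto. }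
  apply not_lt_le in L2. destruct (base_below l' e L1 Le L2) as [l'' [A1 A2]].
  exists l''. split; auto. eapply le_lt_trans; eauto.
Qed.

Lemma sup_base_is_base : level_base d l.
Proof.
  set (h := fun e => match excluded_middle_informative (e = d) with
          | left _ => l | right _ => epsilon (inhabits l) (fun l' => lt l' l /\ D l' = e) end).
  assert (Hh : forall e, lim0 lt e -> lt e d -> lt (h e) l /\ D (h e) = e).
  { intros e Le Ed. unfold h. destruct (excluded_middle_informative (e = d)) as [E|E].
    { subst; exfalso; apply (lt_irrefl _ Ed). }
    apply (epsilon_spec (inhabits l) (fun l' => lt l' l /\ D l' = e)).
    destruct (below_sup_base e Le Ed) as [l' [A B]]. eauto. }
  assert (Hhd : h d = l) by (unfold h; destruct (excluded_middle_informative (d = d)); tauto).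
  split; auto. apply ht_rel_witness. exists h. split; [|split].
  - intros e [Ed|Ed] Le.
    + left. apply (Hh e Le Ed).
    + subst e. rewrite Hhd. apply le_refl.
  - intros e e' E1 L1 [E2|E2] L2 Lee.
    + assert (Ed : lt e d) by (eapply lt_trans; eauto).
      destruct (Hh e L1 Ed) as [A1 A2]. destruct (Hh e' L2 E2) as [B1 B2].
      destruct (lt_total (h e) (h e')) as [C|[C|C]]; auto; exfalso.
      * rewrite <- A2, <- B2, C in Lee. apply (lt_irrefl _ Lee).
      * pose proof (bases_increasing _ _ C A1). rewrite A2, B2 in H. apply (lt_asym _ _ H Lee).
    + subst e'. rewrite Hhd. destruct E1 as [E1|E1]; [apply (Hh e L1 E1)|].
      subst e; exfalso; apply (lt_irrefl _ Lee).
  - intros b [Bl|Bl].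
    + exists (D b). destruct (HD b Bl) as [B1 B2].
      assert (Dd : lt (D b) d) by auto. repeat split; auto.
      * now left.
      * destruct (Hh _ B1 Dd) as [A1 A2]. apply bases_injective; auto.
    + subst b. exists d. repeat split; auto; apply le_refl.
Qed.

End LevelBaseStep.

Lemma level_base_exists l : exists d, level_base d l.
Proof.
  induction (lt_wf l) as [l _ IH].
  set (D := fun x => match excluded_middle_informative (exists d, level_base d x) with
        | left E => proj1_sig (constructive_indefinite_description _ E) | right _ => x end).
  assert (HD : forall l', lt l' l -> level_base (D l') l').
  { intros l' L. unfold D. destruct (excluded_middle_informative _) as [E|E].
    - now destruct (constructive_indefinite_description _ E).
    - exfalso; apply E; auto. }
  destruct (countable_bounded (fun y => exists x, lt x l /\ D x = y)) as [b Hb].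
  { apply countable_image, lt_countable. }
  destruct (lim0_above b) as [e0 [E0 L0]].
  destruct (least_exists (fun e => lim0 lt e /\ forall l', lt l' l -> lt (D l') e))
    as [d [[Ld Cd] Md]].
  { exists e0. split; auto. intros l' L'. eapply lt_trans; [apply Hb|]; eauto. }
  exists d. apply (sup_base_is_base l D HD d); auto.
Qed.

Lemma lim0_between_succ_iter d e n :
  lim0 lt e -> le lt d e -> le lt e (succ_iter n d) -> e = d.
Proof.
  intros Le. induction n; simpl; intros A B.
  - apply le_antisym; auto.
  - destruct B as [B|B].
    + apply IHn; auto. apply not_lt_le. intros L. apply succ_least in L. apply (le_not_lt _ _ L B).
    + subst. exfalso. apply (succ_not_lim0 _ Le).
Qed.

Lemma level_fresh l (F : list W) : exists a, ht_rel lt a l /\ ~ In a F.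
Proof.
  destruct (level_base_exists l) as [d [Ld Hd]]. apply ht_rel_witness in Hd. destruct Hd as [h Hh].
  pose proof Hh as [H1 [H2 H3]].
  assert (Small : forall n e, lim0 lt e -> le lt e (succ_iter n d) -> le lt e d).
  { intros n e Le E. apply not_lt_le. intros L.
    pose proof (lim0_between_succ_iter d e n Le (or_introl L) E). subst e. apply (lt_irrefl _ L). }
  assert (Level : forall n, ht_rel lt (succ_iter n d) l).
  { intros n. apply ht_rel_witness. exists h. split; [|split].
    - intros e E Le. apply H1; auto. apply (Small n); auto.
    - intros e e' E L E' L'. apply H2; auto; eapply Small; eauto.
    - intros b Hb. destruct (H3 b Hb) as [e [E1 [E2 E3]]]. exists e. repeat split; auto.
      eapply le_trans; eauto. apply succ_iter_le. }
  destruct (classic (exists n, ~ In (succ_iter n d) F)) as [[n Nn]|N]; [eauto|exfalso].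
  assert (Inc : incl (map (fun n => succ_iter n d) (seq 0 (S (length F)))) F).
  { intros x Hx. apply in_map_iff in Hx. destruct Hx as [n [E _]]. subst x.
    apply NNPP. intros N2. apply N. eauto. }
  apply NoDup_incl_length in Inc.
  - rewrite length_map, length_seq in Inc. lia.
  - apply Injective_map_NoDup; [|apply seq_NoDup]. intros a b E. eapply succ_iter_inj; eauto.
Qed.

Lemma W_inhabited : inhabited W.
Proof.
  apply NNPP. intros N. apply W_uncountable. apply countable_empty. intros x _. apply N. now constructor.
Qed.

Lemma lg_rel_unique s a b : lg_rel lt s a -> lg_rel lt s b -> a = b.
Proof.
  intros Ha Hb. destruct (lt_total a b) as [L|[L|L]]; auto; exfalso.
  - apply Hb, Ha in L. apply (lt_irrefl _ L).
  - apply Ha, Hb in L. apply (lt_irrefl _ L).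
Qed.

Definition lg (s : sq W) : W := epsilon W_inhabited (lg_rel lt s).

Lemma lg_spec s : is_seq lt s -> lg_rel lt s (lg s).
Proof. intros [a Ha]. apply (epsilon_spec W_inhabited (lg_rel lt s)). eauto. Qed.

Lemma lg_eq s a : lg_rel lt s a -> lg s = a.
Proof. intros H. apply (lg_rel_unique s); auto. apply lg_spec. now exists a. Qed.

Lemma seq_dom s x : is_seq lt s -> (s x <> None <-> lt x (lg s)).
Proof. intros H. apply (lg_spec s H). Qed.

Lemma prefix_refl (s : sq W) : prefix s s. Proof. intros x _; auto. Qed.

Lemma prefix_trans (s t u : sq W) : prefix s t -> prefix t u -> prefix s u.
Proof. intros H1 H2 x Hx. rewrite H2; [apply H1; auto|]. rewrite H1; auto. Qed.

Lemma prefix_antisym (s t : sq W) : prefix s t -> prefix t s -> s = t.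
Proof.
  intros H1 H2. apply functional_extensionality. intros x.
  destruct (s x) eqn:E; [symmetry; rewrite H1; auto; rewrite E; discriminate|].
  destruct (t x) eqn:E2; auto. rewrite <- E, H2; [auto|]. rewrite E2; discriminate.
Qed.

Lemma prefix_lg s t : is_seq lt s -> is_seq lt t -> prefix s t -> le lt (lg s) (lg t).
Proof.
  intros Hs Ht P. apply not_lt_le. intros L. apply (seq_dom s _ Hs) in L.
  pose proof (P _ L). assert (t (lg t) <> None) by congruence.
  apply (seq_dom t _ Ht) in H0. apply (lt_irrefl _ H0).
Qed.

Lemma prefix_of_lg_le s1 s2 t : is_seq lt s1 -> is_seq lt s2 -> prefix s1 t -> prefix s2 t ->
  le lt (lg s1) (lg s2) -> prefix s1 s2.
Proof.
  intros H1 H2 P1 P2 L x Hx. pose proof Hx as Hx'. apply (seq_dom _ _ H1) in Hx'.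
  assert (s2 x <> None) by (apply (seq_dom _ _ H2); eapply lt_le_trans; eauto).
  rewrite <- (P2 x H). apply P1; auto.
Qed.

Lemma prefix_comparable s1 s2 t : is_seq lt s1 -> is_seq lt s2 -> prefix s1 t -> prefix s2 t ->
  prefix s1 s2 \/ prefix s2 s1.
Proof.
  intros H1 H2 P1 P2. destruct (lt_total (lg s1) (lg s2)) as [L|[L|L]].
  - left. eapply prefix_of_lg_le; eauto. now left.
  - left. eapply prefix_of_lg_le; eauto. now right.
  - right. eapply prefix_of_lg_le; eauto. now left.
Qed.

Lemma prefix_lg_eq s t : is_seq lt s -> is_seq lt t -> prefix s t -> lg s = lg t -> s = t.
Proof.
  intros Hs Ht P E. apply prefix_antisym; auto. apply (prefix_of_lg_le t s t); auto.
  - apply prefix_refl.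
  - rewrite E. apply le_refl.
Qed.

Lemma tree_prefixes_countable (T : sq W -> Prop) t :
  is_tree lt T -> is_seq lt t -> countable (fun s => T s /\ prefix s t).
Proof.
  intros HT Ht.
  apply (countable_inj (fun s => T s /\ prefix s t) (fun x => le lt x (lg t)) lg).
  - intros s [Ts P]. apply prefix_lg; auto. now apply HT.
  - intros s1 s2 [T1 P1] [T2 P2] E.
    assert (S1 : is_seq lt s1) by now apply HT.
    assert (S2 : is_seq lt s2) by now apply HT.
    destruct (prefix_comparable s1 s2 t S1 S2 P1 P2) as [Q|Q].
    + apply prefix_lg_eq; auto.
    + symmetry. apply prefix_lg_eq; auto.
  - apply le_countable.
Qed.

Definition meet (s t : sq W) : sq W := fun x =>
  if excluded_middle_informative (forall y, le lt y x -> s y = t y) then s x else None.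

Lemma meet_is_meet s t : is_meet lt s t (meet s t).
Proof.
  intros x. unfold meet. destruct (excluded_middle_informative _); split; intros; auto; contradiction.
Qed.

Lemma is_meet_eq s t r : is_meet lt s t r -> r = meet s t.
Proof.
  intros H. apply functional_extensionality. intros x. unfold meet. destruct (H x) as [H1 H2].
  destruct (excluded_middle_informative _); auto.
Qed.

Lemma meet_prefix_l s t : prefix (meet s t) s.
Proof.
  intros x. unfold meet. destruct (excluded_middle_informative _); auto. intros N; contradiction.
Qed.

Lemma meet_prefix_r s t : prefix (meet s t) t.
Proof.
  intros x. unfold meet. destruct (excluded_middle_informative _) as [A|A]; [|intros N; contradiction].
  intros _. symmetry. apply A. apply le_refl.
Qed.

Lemma meet_comm s t : meet s t = meet t s.
Proof.
  apply functional_extensionality. intros x. unfold meet.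
  destruct (excluded_middle_informative (forall y, le lt y x -> s y = t y)) as [A|A];
  destruct (excluded_middle_informative (forall y, le lt y x -> t y = s y)) as [B|B]; auto.
  - apply A. apply le_refl.
  - exfalso. apply B. intros. symmetry; auto.
  - exfalso. apply A. intros. symmetry; auto.
Qed.

Lemma meet_seq s t : is_seq lt s -> is_seq lt (meet s t).
Proof.
  intros Hs.
  set (D := fun x => meet s t x <> None).
  assert (Ddown : forall x y, D x -> lt y x -> D y).
  { unfold D, meet. intros x y.
    destruct (excluded_middle_informative (forall z, le lt z x -> s z = t z)) as [A|A];
      [|intros N; contradiction].
    intros Sx L.
    destruct (excluded_middle_informative (forall z, le lt z y -> s z = t z)) as [B|B].
    - apply (seq_dom _ _ Hs). apply (seq_dom _ _ Hs) in Sx. eapply lt_trans; eauto.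
    - exfalso. apply B. intros z Z. apply A. eapply le_trans; eauto. now left. }
  destruct (least_exists (fun x => ~ D x)) as [a [Na Ma]].
  { exists (lg s). unfold D. intros N.
    assert (s (lg s) <> None) by (rewrite (meet_prefix_l s t _ N); auto).
    apply (seq_dom _ _ Hs) in H. apply (lt_irrefl _ H). }
  exists a. intros x. split.
  - intros Dx. apply NNPP. intros N. apply not_lt_le in N. destruct N as [N|N].
    + apply Na. eapply Ddown; eauto.
    + subst; contradiction.
  - intros L. apply NNPP. intros N. apply (le_not_lt _ _ (Ma x N) L).
Qed.

Lemma meet_greatest r s t : is_seq lt r -> prefix r s -> prefix r t -> prefix r (meet s t).
Proof.
  intros Hr P1 P2 x Hx. unfold meet. destruct (excluded_middle_informative _) as [A|A].
  - rewrite P1; auto.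
  - exfalso. apply A. intros y Y.
    assert (r y <> None).
    { destruct Y as [Y|Y]; [|subst; auto]. apply (seq_dom _ _ Hr). apply (seq_dom _ _ Hr) in Hx.
      eapply lt_trans; eauto. }
    rewrite P1, P2; auto.
Qed.

Lemma tree_meet (T : sq W -> Prop) s t : is_tree lt T -> T s -> T (meet s t).
Proof.
  intros HT Ts. apply (proj2 HT (meet s t) s); auto.
  - apply meet_seq. now apply HT.
  - apply meet_prefix_l.
Qed.

Lemma meet_meet_cases s t w : is_seq lt s -> is_seq lt t -> is_seq lt w ->
  meet (meet s t) w = meet s t \/ meet (meet s t) w = meet s w.
Proof.
  intros Hs Ht Hw0.
  assert (SA : is_seq lt (meet s t)) by (apply meet_seq; auto).
  assert (SB : is_seq lt (meet s w)) by (apply meet_seq; auto).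
  destruct (prefix_comparable (meet s t) (meet s w) s SA SB (meet_prefix_l _ _) (meet_prefix_l _ _))
    as [P|P].
  - left. apply prefix_antisym; [apply meet_prefix_l|].
    apply meet_greatest; auto; [apply prefix_refl|]. eapply prefix_trans; eauto. apply meet_prefix_r.
  - right. apply prefix_antisym.
    + apply meet_greatest; [apply meet_seq; auto| |apply meet_prefix_r].
      eapply prefix_trans; apply meet_prefix_l.
    + apply meet_greatest; auto. apply meet_prefix_r.
Qed.

Lemma sprefix_irrefl (s : sq W) : ~ sprefix s s.
Proof. intros [_ N]. now apply N. Qed.

Lemma sprefix_trans (s t u : sq W) : sprefix s t -> sprefix t u -> sprefix s u.
Proof.
  intros [P1 N1] [P2 N2]. split; [eapply prefix_trans; eauto|].
  intros E. subst. apply N2. apply prefix_antisym; auto.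
Qed.

Section ConditionFacts.
Variable T : sq W -> Prop.
Variable p : cond W.
Hypothesis Hp : is_cond lt T p.

Lemma cu_tree s : cu p s -> T s. Proof. apply Hp. Qed.
Lemma cu_finite : finite (cu p). Proof. apply Hp. Qed.
Lemma cv_finite : finite (cv p). Proof. apply Hp. Qed.
Lemma cu_empty : cu p (@empty_seq W). Proof. apply Hp. Qed.
Lemma cu_is_meet s t : cu p s -> cu p t -> exists r, is_meet lt s t r /\ cu p r. Proof. apply Hp. Qed.
Lemma clt_cv a b : clt p a b -> cv p a /\ cv p b. Proof. apply Hp. Qed.
Lemma clt_irrefl a : ~ clt p a a. Proof. apply Hp. Qed.
Lemma clt_trans a b d : clt p a b -> clt p b d -> clt p a d. Proof. apply Hp. Qed.
Lemma cf_dom s a : cf p s a -> cu p s /\ cv p a. Proof. apply Hp. Qed.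
Lemma cf_functional s a b : cf p s a -> cf p s b -> a = b. Proof. apply Hp. Qed.
Lemma cf_total s : cu p s -> exists a, cf p s a. Proof. apply Hp. Qed.
Lemma cf_surj a : cv p a -> exists s, cf p s a. Proof. apply Hp. Qed.
Lemma cf_mono s t a b : sprefix s t -> cf p s a -> cf p t b -> clt p a b. Proof. apply Hp. Qed.
Lemma cf_height s a : cf p s a -> forall l, lg_rel lt s l -> ht_rel lt a l. Proof. apply Hp. Qed.
Lemma cc_dom a n : cc p a n -> cv p a. Proof. apply Hp. Qed.
Lemma cc_functional a n k : cc p a n -> cc p a k -> n = k. Proof. apply Hp. Qed.
Lemma cc_total a : cv p a -> exists n, cc p a n. Proof. apply Hp. Qed.
Lemma cc_proper a b n k : clt p a b -> cc p a n -> cc p b k -> n <> k. Proof. apply Hp. Qed.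

Lemma cu_meet s t : cu p s -> cu p t -> cu p (meet s t).
Proof.
  intros A B. destruct (cu_is_meet s t A B) as [r [M C]]. now rewrite <- (is_meet_eq _ _ _ M).
Qed.

Lemma cu_seq s : is_tree lt T -> cu p s -> is_seq lt s.
Proof. intros HT H. apply HT. now apply cu_tree. Qed.

End ConditionFacts.

Lemma cc_bounded T p : is_cond lt T p -> exists c0, forall a c, cc p a c -> c < c0.
Proof.
  intros Hp. destruct (cv_finite _ _ Hp) as [L HL].
  set (col := fun a => epsilon (inhabits 0) (cc p a)).
  exists (S (list_max (map col L))). intros a c H. apply Nat.lt_succ_r, le_list_max, in_map_iff.
  exists a. split.
  - symmetry. apply (cc_functional _ _ Hp a); auto. apply (epsilon_spec (inhabits 0) (cc p a)). eauto.
  - apply HL. apply (cc_dom _ _ Hp _ _ H).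
Qed.

Section Amalgamation.
Variable T : sq W -> Prop.
Hypothesis HT : is_tree lt T.
Variables p q : cond W.
Hypothesis Hp : is_cond lt T p.
Hypothesis Hq : is_cond lt T q.
Variable transfer : W -> W.
Hypothesis Htransfer_id : forall a, cv q a -> cv p a -> transfer a = a.
Hypothesis Htransfer_lt : forall a b, clt q a b -> clt p (transfer a) (transfer b).
Hypothesis Htransfer_cc : forall a c, cc q a c -> cc p (transfer a) c.
Hypothesis Hcommon_f : forall s a, cu p s -> cu q s -> cf q s a -> cf p s a.
Hypothesis Hapart : forall s t, cu p s -> ~ cu q s -> cu q t -> ~ cu p t ->
  ~ prefix s t /\ ~ prefix t s.

Definition old_node s := cu p s \/ cu q s.
Definition common_node s := cu p s /\ cu q s.
Definition new_node s :=
  (exists e n, cu p e /\ cu q n /\ s = meet e n) /\ ~ cu p s /\ ~ cu q s.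

Variable fresh : list (sq W * W).
Hypothesis Hfresh_nodes : NoDup (map fst fresh).
Hypothesis Hfresh_points : NoDup (map snd fresh).
Hypothesis Hfresh_new : forall s, new_node s <-> In s (map fst fresh).
Hypothesis Hfresh_height : forall s w, In (s, w) fresh -> ht_rel lt w (lg s).
Hypothesis Hfresh_not_old : forall s w, In (s, w) fresh -> ~ cv p w /\ ~ cv q w.
Variable c0 : nat.
Hypothesis Hc0 : forall a c, cc p a c \/ cc q a c -> c < c0.

Definition f_p s := epsilon W_inhabited (cf p s).
Definition f_q s := epsilon W_inhabited (cf q s).
Definition f_new s := epsilon W_inhabited (fun w => In (s, w) fresh).
Definition node_of a := epsilon (inhabits (@empty_seq W)) (fun s => In (s, a) fresh).
Definition new_point a := In a (map snd fresh).
Definition old_point a := cv p a \/ cv q a.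

Definition f_amalg s :=
  if excluded_middle_informative (cu p s) then f_p s else
  if excluded_middle_informative (cu q s) then f_q s else f_new s.
Definition u_amalg s := cu p s \/ cu q s \/ exists e n, cu p e /\ cu q n /\ s = meet e n.
Definition v_amalg a := cv p a \/ cv q a \/ new_point a.
Definition cf_amalg s a := u_amalg s /\ a = f_amalg s.
Definition cc_amalg a c :=
  cc p a c \/ cc q a c \/ (new_point a /\ c = c0 + index_of a (map snd fresh)).
Definition clt_amalg_step a b :=
  clt p a b \/ clt q a b \/ exists s t, sprefix s t /\ cf_amalg s a /\ cf_amalg t b.
Definition clt_amalg := clos_trans W clt_amalg_step.
Definition amalgam := Cond u_amalg v_amalg clt_amalg cf_amalg cc_amalg.

Lemma f_p_spec s : cu p s -> cf p s (f_p s).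
Proof. intros H. apply (epsilon_spec W_inhabited (cf p s)). apply (cf_total _ _ Hp); auto. Qed.

Lemma f_q_spec s : cu q s -> cf q s (f_q s).
Proof. intros H. apply (epsilon_spec W_inhabited (cf q s)). apply (cf_total _ _ Hq); auto. Qed.

Lemma f_p_eq_f_q s : common_node s -> f_p s = f_q s.
Proof.
  intros [A B]. apply (cf_functional _ _ Hp s); [apply f_p_spec; auto|].
  apply Hcommon_f; auto. apply f_q_spec; auto.
Qed.

Lemma f_new_spec s : new_node s -> In (s, f_new s) fresh.
Proof.
  intros H. apply Hfresh_new, in_map_iff in H. destruct H as [[s' w] [E I]]. simpl in E. subst s'.
  apply (epsilon_spec W_inhabited (fun w => In (s, w) fresh)). eauto.
Qed.

Lemma node_of_spec a : new_point a -> In (node_of a, a) fresh.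
Proof.
  intros H. apply in_map_iff in H. destruct H as [[s w] [E I]]. simpl in E. subst w.
  apply (epsilon_spec (inhabits (@empty_seq W)) (fun s => In (s, a) fresh)). eauto.
Qed.

Lemma f_amalg_p s : cu p s -> f_amalg s = f_p s.
Proof. intros H. unfold f_amalg. destruct (excluded_middle_informative (cu p s)); tauto. Qed.

Lemma f_amalg_q s : cu q s -> f_amalg s = f_q s.
Proof.
  intros H. unfold f_amalg. destruct (excluded_middle_informative (cu p s)).
  - apply f_p_eq_f_q. split; auto.
  - destruct (excluded_middle_informative (cu q s)); tauto.
Qed.

Lemma f_amalg_new s : new_node s -> f_amalg s = f_new s.
Proof.
  intros [_ [A B]]. unfold f_amalg.
  destruct (excluded_middle_informative (cu p s)); [contradiction|].
  destruct (excluded_middle_informative (cu q s)); [contradiction|auto].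
Qed.

Lemma u_amalg_cases s : u_amalg s -> old_node s \/ new_node s.
Proof.
  unfold old_node. intros [H|[H|H]]; auto.
  destruct (classic (cu p s)); auto. destruct (classic (cu q s)); auto. right. split; auto.
Qed.

Lemma new_node_split s :
  new_node s -> exists e n, cu p e /\ ~ cu q e /\ cu q n /\ ~ cu p n /\ s = meet e n.
Proof.
  intros [[e [n [A [B E]]]] [C D]]. exists e, n. repeat split; auto.
  - intros X. apply D. subst. apply (cu_meet _ _ Hq); auto.
  - intros X. apply C. subst. apply (cu_meet _ _ Hp); auto.
Qed.

Lemma old_below_new_node s t : new_node t -> old_node s -> prefix s t -> common_node s.
Proof.
  intros Mt Hs Pst. destruct (new_node_split _ Mt) as [e [n [A [B [C [D E]]]]]]. subst t.
  destruct Hs as [Hs|Hs].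
  - split; auto. apply NNPP. intros N. apply (proj1 (Hapart s n Hs N C D)).
    eapply prefix_trans; eauto. apply meet_prefix_r.
  - split; auto. apply NNPP. intros N. apply (proj2 (Hapart e s A B Hs N)).
    eapply prefix_trans; eauto. apply meet_prefix_l.
Qed.

Lemma old_prefix_same_side s t : old_node s -> old_node t -> prefix s t ->
  (cu p s /\ cu p t) \/ (cu q s /\ cu q t).
Proof.
  intros Hs Ht Pst.
  destruct (classic (cu p s)) as [A|A]; destruct (classic (cu p t)) as [B|B]; auto.
  - destruct Ht as [Ht|Ht]; [contradiction|]. destruct (classic (cu q s)) as [C|C]; auto.
    exfalso. apply (proj1 (Hapart s t A C Ht B)); auto.
  - destruct Hs as [Hs|Hs]; [contradiction|]. destruct (classic (cu q t)) as [C|C]; auto.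
    exfalso. apply (proj2 (Hapart t s B C Hs A)); auto.
  - destruct Hs as [Hs|Hs]; [contradiction|]. destruct Ht as [Ht|Ht]; [contradiction|]. auto.
Qed.

Lemma new_point_not_old a : new_point a -> ~ old_point a.
Proof.
  intros H. apply in_map_iff in H. destruct H as [[s w] [E I]]. simpl in E. subst w.
  destruct (Hfresh_not_old _ _ I). intros [X|X]; auto.
Qed.

Lemma node_of_new_point a : new_point a -> new_node (node_of a) /\ f_amalg (node_of a) = a.
Proof.
  intros H. pose proof (node_of_spec a H) as I. assert (M : new_node (node_of a)).
  { apply Hfresh_new. apply in_map_iff. exists (node_of a, a); auto. }
  split; auto. rewrite f_amalg_new; auto. eapply In_pair_functional; eauto. apply f_new_spec; auto.
Qed.

Lemma f_amalg_new_node s : new_node s -> new_point (f_amalg s) /\ node_of (f_amalg s) = s.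
Proof.
  intros M. rewrite f_amalg_new; auto. pose proof (f_new_spec s M) as I.
  assert (new_point (f_new s)) by (apply in_map_iff; exists (s, f_new s); auto).
  split; auto. eapply In_pair_injective; eauto. apply node_of_spec; auto.
Qed.

Lemma f_amalg_old s : old_node s -> old_point (f_amalg s).
Proof.
  intros [H|H].
  - rewrite f_amalg_p; auto. left. apply (cf_dom _ _ Hp s). apply f_p_spec; auto.
  - rewrite f_amalg_q; auto. right. apply (cf_dom _ _ Hq s). apply f_q_spec; auto.
Qed.

Definition proj a := if excluded_middle_informative (cv p a) then a else transfer a.

Lemma proj_p a : cv p a -> proj a = a.
Proof. intros H. unfold proj. destruct (excluded_middle_informative (cv p a)); tauto. Qed.

Lemma proj_q a : cv q a -> proj a = transfer a.
Proof.
  intros H. unfold proj. destruct (excluded_middle_informative (cv p a)); auto. symmetry; auto.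
Qed.

Definition le_p x y := x = y \/ clt p x y.

Lemma le_p_trans x y z : le_p x y -> le_p y z -> le_p x z.
Proof. intros [A|A] [B|B]; subst; unfold le_p; auto. right; eapply (clt_trans _ _ Hp); eauto. Qed.

Lemma le_p_clt_trans x y z : le_p x y -> clt p y z -> clt p x z.
Proof. intros [A|A] B; subst; auto. eapply (clt_trans _ _ Hp); eauto. Qed.

Lemma clt_le_p_trans x y z : clt p x y -> le_p y z -> clt p x z.
Proof. intros A [B|B]; subst; auto. eapply (clt_trans _ _ Hp); eauto. Qed.

Lemma f_common_below_old r s :
  common_node r -> old_node s -> sprefix r s -> clt p (f_p r) (proj (f_amalg s)).
Proof.
  intros [R1 R2] Hs Prs. destruct (classic (cu p s)) as [A|A].
  - rewrite f_amalg_p, proj_p; auto.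
    + eapply (cf_mono _ _ Hp); eauto; apply f_p_spec; auto.
    + apply (cf_dom _ _ Hp s); apply f_p_spec; auto.
  - destruct Hs as [Hs|Hs]; [contradiction|]. rewrite f_amalg_q, proj_q; auto.
    + rewrite (f_p_eq_f_q r (conj R1 R2)). rewrite <- (Htransfer_id (f_q r)).
      * apply Htransfer_lt. eapply (cf_mono _ _ Hq); eauto; apply f_q_spec; auto.
      * apply (cf_dom _ _ Hq r). apply f_q_spec; auto.
      * rewrite <- f_p_eq_f_q; [|split; auto]. apply (cf_dom _ _ Hp r). apply f_p_spec; auto.
    + apply (cf_dom _ _ Hq s); apply f_q_spec; auto.
Qed.

(* A transitive, irreflexive relation containing the generators of [clt_amalg]: old points
   are compared in [p] through [proj]; a new point sits above the old points below some common
   node under its node, and below the old points above some old node over its node. *)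
Definition proj_lt a b :=
    (old_point a /\ old_point b /\ clt p (proj a) (proj b))
 \/ (old_point a /\ new_point b /\
       exists r, common_node r /\ sprefix r (node_of b) /\ le_p (proj a) (f_p r))
 \/ (new_point a /\ old_point b /\
       exists s, old_node s /\ sprefix (node_of a) s /\ le_p (proj (f_amalg s)) (proj b))
 \/ (new_point a /\ new_point b /\
       (sprefix (node_of a) (node_of b) \/
        exists s r, old_node s /\ common_node r /\ sprefix (node_of a) s /\
          sprefix r (node_of b) /\ le_p (proj (f_amalg s)) (f_p r))).

Lemma proj_lt_trans a b c : proj_lt a b -> proj_lt b c -> proj_lt a c.
Proof.
  intros Zab Zbc.
  destruct Zab as [[A1 [B1 L1]]|[[A1 [B1 [r [R1 [P1 L1]]]]]|
                   [[A1 [B1 [s [S1 [P1 L1]]]]]|[A1 [B1 H1]]]]];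
  destruct Zbc as [[A2 [B2 L2]]|[[A2 [B2 [r' [R2 [P2 L2]]]]]|
                   [[A2 [B2 [s' [S2 [P2 L2]]]]]|[A2 [B2 H2]]]]];
  try (exfalso; apply (new_point_not_old b); auto; fail).
  - left. split; [auto|split; [auto|]]. eapply (clt_trans _ _ Hp); eauto.
  - right; left. split; [auto|split; [auto|]]. exists r'. split; [auto|split; [auto|]].
    right. eapply clt_le_p_trans; eauto.
  - left. split; [auto|split; [auto|]]. eapply le_p_clt_trans; [eauto|].
    eapply clt_le_p_trans; [|eauto]. apply f_common_below_old; auto. eapply sprefix_trans; eauto.
  - right; left. split; [auto|split; [auto|]].
    destruct H2 as [H2|[s' [r' [S2 [R2 [P2 [P3 L2]]]]]]].
    + exists r. split; [auto|split; [|auto]]. eapply sprefix_trans; eauto.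
    + exists r'. split; [auto|split; [auto|]]. right. eapply le_p_clt_trans; [eauto|].
      eapply clt_le_p_trans; [|eauto]. apply f_common_below_old; auto. eapply sprefix_trans; eauto.
  - right; right; left. split; [auto|split; [auto|]]. exists s. split; [auto|split; [auto|]].
    right. eapply le_p_clt_trans; eauto.
  - right; right; right. split; [auto|split; [auto|]]. right. exists s, r'.
    split; [auto|split; [auto|split; [auto|split; [auto|]]]]. eapply le_p_trans; eauto.
  - right; right; left. split; [auto|split; [auto|]].
    destruct H1 as [H1|[s [r [S1 [R1 [P1 [P3 L1]]]]]]].
    + exists s'. split; [auto|split; [|auto]]. eapply sprefix_trans; eauto.
    + exists s. split; [auto|split; [auto|]]. right. eapply le_p_clt_trans; [eauto|].
      eapply clt_le_p_trans; [|eauto]. apply f_common_below_old; auto. eapply sprefix_trans; eauto.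
  - right; right; right. split; [auto|split; [auto|]].
    destruct H1 as [H1|[s [r [S1 [R1 [P1 [P3 L1]]]]]]];
    destruct H2 as [H2|[s' [r' [S2 [R2 [P2 [P4 L2]]]]]]].
    + left. eapply sprefix_trans; eauto.
    + right. exists s', r'. split; [auto|split; [auto|split; [|split; [auto|auto]]]].
      eapply sprefix_trans; eauto.
    + right. exists s, r. split; [auto|split; [auto|split; [auto|split; [|auto]]]].
      eapply sprefix_trans; eauto.
    + right. exists s, r'. split; [auto|split; [auto|split; [auto|split; [auto|]]]].
      right. eapply le_p_clt_trans; [eauto|]. eapply clt_le_p_trans; [|eauto].
      apply f_common_below_old; auto. eapply sprefix_trans; eauto.
Qed.

Lemma proj_lt_irrefl a : ~ proj_lt a a.
Proof.
  intros [[A1 [B1 L1]]|[[A1 [B1 _]]|[[A1 [B1 _]]|[A1 [B1 H1]]]]].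
  - apply (clt_irrefl _ _ Hp _ L1).
  - apply (new_point_not_old a); auto.
  - apply (new_point_not_old a); auto.
  - destruct H1 as [H1|[s [r [S1 [R1 [P1 [P3 L1]]]]]]].
    + apply (sprefix_irrefl _ H1).
    + assert (X : clt p (f_p r) (proj (f_amalg s))).
      { apply f_common_below_old; auto. eapply sprefix_trans; eauto. }
      apply (clt_irrefl _ _ Hp (f_p r)). eapply clt_le_p_trans; eauto.
Qed.

Lemma clt_amalg_step_proj_lt a b : clt_amalg_step a b -> proj_lt a b.
Proof.
  intros [H|[H|[s [t [Pst [[Cs Es] [Ct Et]]]]]]].
  - destruct (clt_cv _ _ Hp _ _ H). left. unfold old_point. rewrite !proj_p; auto.
  - destruct (clt_cv _ _ Hq _ _ H). left. unfold old_point. rewrite !proj_q; auto.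
  - subst a b. apply u_amalg_cases in Cs. apply u_amalg_cases in Ct.
    destruct (classic (old_node s)) as [Os|Os]; destruct (classic (old_node t)) as [Ot|Ot].
    + left. split; [apply f_amalg_old; auto|]. split; [apply f_amalg_old; auto|].
      destruct (old_prefix_same_side s t Os Ot (proj1 Pst)) as [[X Y]|[X Y]].
      * rewrite !f_amalg_p, !proj_p; auto.
        -- eapply (cf_mono _ _ Hp); eauto; apply f_p_spec; auto.
        -- apply (cf_dom _ _ Hp t); apply f_p_spec; auto.
        -- apply (cf_dom _ _ Hp s); apply f_p_spec; auto.
      * rewrite !f_amalg_q, !proj_q; auto.
        -- apply Htransfer_lt. eapply (cf_mono _ _ Hq); eauto; apply f_q_spec; auto.
        -- apply (cf_dom _ _ Hq t); apply f_q_spec; auto.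
        -- apply (cf_dom _ _ Hq s); apply f_q_spec; auto.
    + assert (Mt : new_node t) by tauto.
      destruct (f_amalg_new_node t Mt) as [N1 N2].
      destruct (old_below_new_node s t Mt Os (proj1 Pst)) as [R1 R2].
      right; left. split; [apply f_amalg_old; auto|]. split; auto.
      exists s. split; [split; auto|]. split; [rewrite N2; auto|].
      left. rewrite f_amalg_p, proj_p; auto. apply (cf_dom _ _ Hp s); apply f_p_spec; auto.
    + assert (Ms : new_node s) by tauto.
      destruct (f_amalg_new_node s Ms) as [N1 N2].
      right; right; left. split; auto. split; [apply f_amalg_old; auto|].
      exists t. split; auto. split; [rewrite N2; auto|]. now left.
    + assert (Ms : new_node s) by tauto. assert (Mt : new_node t) by tauto.
      destruct (f_amalg_new_node s Ms) as [N1 N2]. destruct (f_amalg_new_node t Mt) as [N3 N4].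
      right; right; right. split; auto. split; auto. left. rewrite N2, N4; auto.
Qed.

Lemma clt_amalg_proj_lt a b : clt_amalg a b -> proj_lt a b.
Proof.
  induction 1; [apply clt_amalg_step_proj_lt; auto|]. eapply proj_lt_trans; eauto.
Qed.

Lemma cc_amalg_old a c : old_point a -> cc_amalg a c -> cc p (proj a) c /\ c < c0.
Proof.
  intros O [H|[H|[H _]]].
  - split; [|apply (Hc0 a); auto]. rewrite proj_p; auto. apply (cc_dom _ _ Hp _ _ H).
  - split; [|apply (Hc0 a); auto]. rewrite proj_q; auto. apply (cc_dom _ _ Hq _ _ H).
  - exfalso. apply (new_point_not_old a); auto.
Qed.

Lemma cc_amalg_new a c : new_point a -> cc_amalg a c -> c = c0 + index_of a (map snd fresh).
Proof.
  intros N [H|[H|[_ H]]]; auto; exfalso; apply (new_point_not_old a N).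
  - left. apply (cc_dom _ _ Hp _ _ H).
  - right. apply (cc_dom _ _ Hq _ _ H).
Qed.

Lemma proj_lt_colours a b c d : proj_lt a b -> cc_amalg a c -> cc_amalg b d -> c <> d.
Proof.
  intros Zab Ca Cb. pose proof (proj_lt_irrefl a) as Irr.
  destruct Zab as [[A1 [B1 L1]]|[[A1 [B1 _]]|[[A1 [B1 _]]|[A1 [B1 H1]]]]].
  - destruct (cc_amalg_old _ _ A1 Ca), (cc_amalg_old _ _ B1 Cb). eapply (cc_proper _ _ Hp); eauto.
  - destruct (cc_amalg_old _ _ A1 Ca). rewrite (cc_amalg_new _ _ B1 Cb). lia.
  - destruct (cc_amalg_old _ _ B1 Cb). rewrite (cc_amalg_new _ _ A1 Ca). lia.
  - rewrite (cc_amalg_new _ _ A1 Ca), (cc_amalg_new _ _ B1 Cb). intros E.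
    assert (index_of a (map snd fresh) = index_of b (map snd fresh)) by lia.
    assert (a = b) by (eapply index_of_inj; eauto). subst b.
    apply Irr. right; right; right. auto.
Qed.

Lemma u_p_seq s : cu p s -> is_seq lt s. Proof. exact (cu_seq _ _ Hp s HT). Qed.
Lemma u_q_seq s : cu q s -> is_seq lt s. Proof. exact (cu_seq _ _ Hq s HT). Qed.

Lemma u_amalg_seq s : u_amalg s -> is_seq lt s.
Proof.
  intros [H|[H|[e [n [A [B E]]]]]]; [apply u_p_seq; auto|apply u_q_seq; auto|].
  subst. apply meet_seq. apply u_p_seq; auto.
Qed.

Lemma u_amalg_meet_p s t : u_amalg s -> cu p t -> u_amalg (meet s t).
Proof.
  intros Hs Ht. destruct Hs as [Hs|[Hs|[e [n [A [B E]]]]]].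
  - left. apply (cu_meet _ _ Hp); auto.
  - right; right. exists t, s. repeat split; auto. apply meet_comm.
  - subst s.
    destruct (meet_meet_cases e n t (u_p_seq e A) (u_q_seq n B) (u_p_seq t Ht)) as [X|X];
      rewrite X.
    + right; right. exists e, n. auto.
    + left. apply (cu_meet _ _ Hp); auto.
Qed.

Lemma u_amalg_meet_q s t : u_amalg s -> cu q t -> u_amalg (meet s t).
Proof.
  intros Hs Ht. destruct Hs as [Hs|[Hs|[e [n [A [B E]]]]]].
  - right; right. exists s, t. auto.
  - right; left. apply (cu_meet _ _ Hq); auto.
  - subst s. rewrite (meet_comm e n).
    destruct (meet_meet_cases n e t (u_q_seq n B) (u_p_seq e A) (u_q_seq t Ht)) as [X|X];
      rewrite X.
    + right; right. exists e, n. rewrite meet_comm. auto.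
    + right; left. apply (cu_meet _ _ Hq); auto.
Qed.

Lemma u_amalg_meet s t : u_amalg s -> u_amalg t -> u_amalg (meet s t).
Proof.
  intros Hs Ht. destruct Ht as [Ht|[Ht|[e [n [A [B E]]]]]].
  - apply u_amalg_meet_p; auto.
  - apply u_amalg_meet_q; auto.
  - subst t. rewrite meet_comm.
    destruct (meet_meet_cases e n s (u_p_seq e A) (u_q_seq n B) (u_amalg_seq s Hs)) as [X|X];
      rewrite X.
    + right; right. exists e, n. auto.
    + rewrite meet_comm. apply u_amalg_meet_p; auto.
Qed.

Lemma u_amalg_tree s : u_amalg s -> T s.
Proof.
  intros [H|[H|[e [n [A [B E]]]]]]; [apply (cu_tree _ _ Hp); auto|apply (cu_tree _ _ Hq); auto|].
  subst. apply tree_meet; auto. apply (cu_tree _ _ Hp); auto.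
Qed.

Lemma u_amalg_finite : finite u_amalg.
Proof.
  apply finite_or; [apply (cu_finite _ _ Hp)|]. apply finite_or; [apply (cu_finite _ _ Hq)|].
  apply finite_image2; [apply (cu_finite _ _ Hp)|apply (cu_finite _ _ Hq)].
Qed.

Lemma v_amalg_finite : finite v_amalg.
Proof.
  apply finite_or; [apply (cv_finite _ _ Hp)|]. apply finite_or; [apply (cv_finite _ _ Hq)|].
  exists (map snd fresh). intros; unfold new_point; tauto.
Qed.

Lemma f_amalg_v s : u_amalg s -> v_amalg (f_amalg s).
Proof.
  intros H. destruct (u_amalg_cases s H) as [O|M].
  - destruct (f_amalg_old s O) as [X|X]; unfold v_amalg; auto.
  - right; right. apply (f_amalg_new_node s M).
Qed.

Lemma clt_amalg_v a b : clt_amalg a b -> v_amalg a /\ v_amalg b.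
Proof.
  induction 1 as [a b H|a b c _ [IH1 _] _ [_ IH2]]; auto.
  destruct H as [H|[H|[s [t [_ [[Cs Es] [Ct Et]]]]]]].
  - destruct (clt_cv _ _ Hp _ _ H). unfold v_amalg; auto.
  - destruct (clt_cv _ _ Hq _ _ H). unfold v_amalg; auto.
  - subst. split; apply f_amalg_v; auto.
Qed.

Lemma cf_amalg_surj a : v_amalg a -> exists s, cf_amalg s a.
Proof.
  intros [H|[H|H]].
  - destruct (cf_surj _ _ Hp a H) as [s Hs]. destruct (cf_dom _ _ Hp _ _ Hs).
    exists s. split; [left; auto|]. rewrite f_amalg_p; auto.
    eapply (cf_functional _ _ Hp); eauto. apply f_p_spec; auto.
  - destruct (cf_surj _ _ Hq a H) as [s Hs]. destruct (cf_dom _ _ Hq _ _ Hs).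
    exists s. split; [right; left; auto|]. rewrite f_amalg_q; auto.
    eapply (cf_functional _ _ Hq); eauto. apply f_q_spec; auto.
  - destruct (node_of_new_point a H) as [[[e [n En]] _] E]. exists (node_of a).
    split; auto. right; right. eauto.
Qed.

Lemma cf_amalg_height s a : cf_amalg s a -> forall l, lg_rel lt s l -> ht_rel lt a l.
Proof.
  intros [H E] l Hl. subst a. destruct (u_amalg_cases s H) as [[H'|H']|H'].
  - rewrite f_amalg_p; auto. eapply (cf_height _ _ Hp); eauto. apply f_p_spec; auto.
  - rewrite f_amalg_q; auto. eapply (cf_height _ _ Hq); eauto. apply f_q_spec; auto.
  - rewrite f_amalg_new, <- (lg_eq s l Hl); auto. apply Hfresh_height, f_new_spec; auto.
Qed.

Lemma cc_amalg_functional a n k : cc_amalg a n -> cc_amalg a k -> n = k.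
Proof.
  intros H1 H2. destruct (classic (new_point a)) as [N|N].
  - rewrite (cc_amalg_new _ _ N H1), (cc_amalg_new _ _ N H2). auto.
  - destruct H1 as [H1|[H1|[H1 _]]]; [| |contradiction];
    destruct H2 as [H2|[H2|[H2 _]]]; try contradiction.
    + apply (cc_functional _ _ Hp a); auto.
    + pose proof (cc_dom _ _ Hp _ _ H1). pose proof (cc_dom _ _ Hq _ _ H2).
      apply Htransfer_cc in H2. rewrite Htransfer_id in H2; auto. apply (cc_functional _ _ Hp a); auto.
    + pose proof (cc_dom _ _ Hq _ _ H1). pose proof (cc_dom _ _ Hp _ _ H2).
      apply Htransfer_cc in H1. rewrite Htransfer_id in H1; auto. apply (cc_functional _ _ Hp a); auto.
    + apply (cc_functional _ _ Hq a); auto.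
Qed.

Lemma cc_amalg_total a : v_amalg a -> exists n, cc_amalg a n.
Proof.
  intros [H|[H|H]].
  - destruct (cc_total _ _ Hp a H) as [n Hn]. exists n. left; auto.
  - destruct (cc_total _ _ Hq a H) as [n Hn]. exists n. right; left; auto.
  - exists (c0 + index_of a (map snd fresh)). right; right; auto.
Qed.

Lemma amalgam_cond : is_cond lt T amalgam.
Proof.
  unfold is_cond; simpl. repeat match goal with |- _ /\ _ => split end.
  - exact u_amalg_tree.
  - exact u_amalg_finite.
  - exact v_amalg_finite.
  - left. apply (cu_empty _ _ Hp).
  - intros s t Hs Ht. exists (meet s t). split; [apply meet_is_meet|apply u_amalg_meet; auto].
  - exact clt_amalg_v.
  - intros a H. apply (proj_lt_irrefl a). apply clt_amalg_proj_lt; auto.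
  - intros a b d H1 H2. eapply t_trans; eauto.
  - intros s a [H E]. subst. split; auto. apply f_amalg_v; auto.
  - intros s a b [_ E1] [_ E2]. congruence.
  - intros s H. exists (f_amalg s). split; auto.
  - exact cf_amalg_surj.
  - intros s t a b P1 H1 H2. apply t_step. right; right. exists s, t. auto.
  - exact cf_amalg_height.
  - intros a n [H|[H|[H _]]]; unfold v_amalg; auto.
    + left. apply (cc_dom _ _ Hp _ _ H).
    + right; left. apply (cc_dom _ _ Hq _ _ H).
  - exact cc_amalg_functional.
  - exact cc_amalg_total.
  - intros a b n k H1 H2 H3. eapply proj_lt_colours; eauto. apply clt_amalg_proj_lt; auto.
Qed.

Lemma amalgam_extends_p : cle p amalgam.
Proof.
  unfold cle; simpl. repeat match goal with |- _ /\ _ => split end.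
  - intros s H. left; auto.
  - intros a H. left; auto.
  - intros a b H. apply t_step. left; auto.
  - intros s a H. destruct (cf_dom _ _ Hp _ _ H). split; [left; auto|].
    rewrite f_amalg_p; auto. eapply (cf_functional _ _ Hp); eauto. apply f_p_spec; auto.
  - intros a n H. left; auto.
Qed.

Lemma amalgam_extends_q : cle q amalgam.
Proof.
  unfold cle; simpl. repeat match goal with |- _ /\ _ => split end.
  - intros s H. right; left; auto.
  - intros a H. right; left; auto.
  - intros a b H. apply t_step. right; left; auto.
  - intros s a H. destruct (cf_dom _ _ Hq _ _ H). split; [right; left; auto|].
    rewrite f_amalg_q; auto. eapply (cf_functional _ _ Hq); eauto. apply f_q_spec; auto.
  - intros a n H. right; left; auto.
Qed.

End Amalgamation.

Lemma fresh_points_exist (L : list (sq W)) (U : list W) : NoDup L ->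
  exists F, map fst F = L /\ NoDup (map snd F) /\
    forall s w, In (s, w) F -> ht_rel lt w (lg s) /\ ~ In w U.
Proof.
  revert U. induction L as [|a L IH]; intros U N.
  - exists []. simpl. split; [auto|split; [constructor|]]. intros s w H; destruct H.
  - inversion N as [|? ? Na Nl]; subst.
    destruct (level_fresh (lg a) U) as [w [Hw1 Hw2]].
    destruct (IH (w :: U) Nl) as [F [E1 [E2 E3]]].
    exists ((a, w) :: F). simpl. rewrite E1. split; auto. split.
    + constructor; auto. intros I. apply in_map_iff in I. destruct I as [[s0 w0] [E I]].
      simpl in E. subst w0. apply (proj2 (E3 _ _ I)). left; auto.
    + intros s w' [E|I].
      * inversion E; subst. auto.
      * destruct (E3 _ _ I) as [X Y]. split; auto. intros Z. apply Y. right; auto.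
Qed.

Lemma amalgamation_compatible (T : sq W -> Prop) (HT : is_tree lt T) (p q : cond W)
  (Hp : is_cond lt T p) (Hq : is_cond lt T q) (transfer : W -> W)
  (Htransfer_id : forall a, cv q a -> cv p a -> transfer a = a)
  (Htransfer_lt : forall a b, clt q a b -> clt p (transfer a) (transfer b))
  (Htransfer_cc : forall a c, cc q a c -> cc p (transfer a) c)
  (Hcommon_f : forall s a, cu p s -> cu q s -> cf q s a -> cf p s a)
  (Hapart : forall s t, cu p s -> ~ cu q s -> cu q t -> ~ cu p t ->
    ~ prefix s t /\ ~ prefix t s) :
  compatible lt T p q.
Proof.
  assert (FM : finite (new_node p q)).
  { apply finite_subset with (P := fun z => exists a b, cu p a /\ cu q b /\ z = meet a b).
    - apply finite_image2; [apply (cu_finite _ _ Hp)|apply (cu_finite _ _ Hq)].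
    - intros s [H _]. auto. }
  destruct (finite_NoDup _ _ FM) as [LM [NLM HLM]].
  destruct (cv_finite _ _ Hp) as [LVp HLVp]. destruct (cv_finite _ _ Hq) as [LVq HLVq].
  destruct (fresh_points_exist LM (LVp ++ LVq) NLM) as [F [E1 [E2 E3]]].
  destruct (cc_bounded _ _ Hp) as [cp Hcp]. destruct (cc_bounded _ _ Hq) as [cq Hcq].
  set (c0 := Nat.max cp cq).
  assert (Hc0 : forall a c, cc p a c \/ cc q a c -> c < c0).
  { intros a c [H|H]; unfold c0; [specialize (Hcp a c H)|specialize (Hcq a c H)]; lia. }
  exists (amalgam p q F c0). split; [|split].
  - apply (amalgam_cond T HT p q Hp Hq transfer); auto.
    + rewrite E1; auto.
    + intros s. rewrite E1. apply HLM.
    + intros s w H. apply (E3 s w H).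
    + intros s w H. destruct (E3 s w H) as [_ X].
      split; intros Y; apply X; apply in_app_iff; [left; apply HLVp|right; apply HLVq]; auto.
  - apply (amalgam_extends_p T); auto.
  - eapply (amalgam_extends_q T); eauto.
Qed.

(* [default_point] is a junk value, never reached on the enumeration of a condition. *)
Definition u_list (p : cond W) : list (sq W) :=
  match excluded_middle_informative (finite (cu p)) with
  | left H => proj1_sig (constructive_indefinite_description _ (finite_NoDup _ _ H))
  | right _ => [] end.
Definition v_list (p : cond W) : list W :=
  match excluded_middle_informative (finite (cv p)) with
  | left H => proj1_sig (constructive_indefinite_description _ (finite_NoDup _ _ H))
  | right _ => [] end.
Definition default_point : W := epsilon W_inhabited (fun _ => True).

Definition u_at (i : nat) (p : cond W) : sq W := nth i (u_list p) (@empty_seq W).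
Definition v_at (k : nat) (p : cond W) : W := nth k (v_list p) default_point.
Definition f_of (p : cond W) (s : sq W) : W := epsilon W_inhabited (cf p s).
Definition f_index (i : nat) (p : cond W) : nat := index_of (f_of p (u_at i p)) (v_list p).
Definition colour_code (k : nat) (p : cond W) : nat := epsilon (inhabits 0) (cc p (v_at k p)).
Definition order_code (k l : nat) (p : cond W) : nat :=
  if excluded_middle_informative (clt p (v_at k p) (v_at l p)) then 1 else 0.

Lemma u_list_spec p : finite (cu p) -> NoDup (u_list p) /\ forall s, cu p s <-> In s (u_list p).
Proof.
  intros H. unfold u_list. destruct (excluded_middle_informative _) as [H'|H']; [|contradiction].
  exact (proj2_sig (constructive_indefinite_description _ (finite_NoDup _ _ H'))).
Qed.

Lemma v_list_spec p : finite (cv p) -> NoDup (v_list p) /\ forall a, cv p a <-> In a (v_list p).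
Proof.
  intros H. unfold v_list. destruct (excluded_middle_informative _) as [H'|H']; [|contradiction].
  exact (proj2_sig (constructive_indefinite_description _ (finite_NoDup _ _ H'))).
Qed.

(* The coordinates that are constant on [J] form the root of a Delta-system. *)
Record homogeneous (J : cond W -> Prop) (n m : nat) : Prop := {
  hom_u_length : forall x, J x -> length (u_list x) = n;
  hom_v_length : forall x, J x -> length (v_list x) = m;
  hom_u_at : forall i, i < n -> fibre_dichotomy J (u_at i);
  hom_v_at : forall k, k < m -> fibre_dichotomy J (v_at k);
  hom_order : forall k l x y, k < m -> l < m -> J x -> J y ->
    clt x (v_at k x) (v_at l x) -> clt y (v_at k y) (v_at l y);
  hom_colour : forall k x y, k < m -> J x -> J y -> colour_code k x = colour_code k y;
  hom_f_index : forall i x y, i < n -> J x -> J y -> f_index i x = f_index i y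
}.

Lemma homogeneous_refinement (T : sq W -> Prop) (A : cond W -> Prop) :
  (forall p, A p -> is_cond lt T p) -> ~ countable A ->
  exists J n m, (forall x, J x -> A x) /\ ~ countable J /\ homogeneous J n m.
Proof.
  intros HA HAunc.
  destruct (pigeonhole_nat A (fun p => length (u_list p)) HAunc) as [n Hn].
  destruct (pigeonhole_nat _ (fun p => length (v_list p)) Hn) as [m Hm].
  destruct (fibre_dichotomy_refine_list (map u_at (seq 0 n)) _ Hm) as [J1 [S1 [U1 T1]]].
  destruct (fibre_dichotomy_refine_list (map v_at (seq 0 m)) J1 U1) as [J2 [S2 [U2 T2]]].
  set (codes := map (fun kl => order_code (fst kl) (snd kl)) (list_prod (seq 0 m) (seq 0 m)) ++
                map colour_code (seq 0 m) ++ map f_index (seq 0 n)).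
  destruct (fibre_dichotomy_refine_list codes J2 U2) as [J [S3 [U3 T3]]].
  assert (Const : forall g, In g codes -> forall x y, J x -> J y -> g x = g y).
  { intros g I x y Jx Jy. destruct (fibre_dichotomy_nat J g U3 (T3 g I)) as [c Hc].
    rewrite (Hc x Jx), (Hc y Jy). auto. }
  assert (JA : forall x, J x -> (A x /\ length (u_list x) = n) /\ length (v_list x) = m)
    by (intros x Jx; apply S1, S2, S3; auto).
  exists J, n, m. split; [intros x Jx; apply JA; auto|]. split; [auto|]. constructor.
  - intros x Jx. apply JA; auto.
  - intros x Jx. apply JA; auto.
  - intros i Li. apply (fibre_dichotomy_subset J1); [intros x Jx; apply S2, S3; auto|].
    apply T1, in_map, in_seq. lia.
  - intros k Lk. apply (fibre_dichotomy_subset J2); [intros x Jx; apply S3; auto|].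
    apply T2, in_map, in_seq. lia.
  - intros k l x y Lk Ll Jx Jy H.
    assert (E : order_code k l x = order_code k l y).
    { apply (Const (order_code k l)); auto. apply in_app_iff. left.
      apply (in_map (fun kl => order_code (fst kl) (snd kl)) _ (k, l)).
      apply in_prod; apply in_seq; lia. }
    unfold order_code in E.
    destruct (excluded_middle_informative (clt x (v_at k x) (v_at l x))); [|contradiction].
    destruct (excluded_middle_informative (clt y (v_at k y) (v_at l y))); auto. discriminate.
  - intros k x y Lk Jx Jy. apply (Const (colour_code k)); auto.
    apply in_app_iff. right. apply in_app_iff. left. apply in_map, in_seq. lia.
  - intros i x y Li Jx Jy. apply (Const (f_index i)); auto.
    apply in_app_iff. right. apply in_app_iff. right. apply in_map, in_seq. lia.
Qed.

Section Homogeneous.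
Variable T : sq W -> Prop.
Hypothesis HT : is_tree lt T.
Variable J : cond W -> Prop.
Variables n m : nat.
Hypothesis HJcond : forall x, J x -> is_cond lt T x.
Hypothesis HJ : homogeneous J n m.
Hypothesis HJunc : ~ countable J.

Lemma u_list_ok x : J x -> NoDup (u_list x) /\ forall s, cu x s <-> In s (u_list x).
Proof. intros H. apply u_list_spec. apply (cu_finite _ _ (HJcond x H)). Qed.

Lemma v_list_ok x : J x -> NoDup (v_list x) /\ forall a, cv x a <-> In a (v_list x).
Proof. intros H. apply v_list_spec. apply (cv_finite _ _ (HJcond x H)). Qed.

Lemma u_at_cu x i : J x -> i < n -> cu x (u_at i x).
Proof.
  intros H L. apply (u_list_ok x H). apply nth_In. rewrite (hom_u_length _ _ _ HJ); auto.
Qed.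

Lemma v_at_cv x k : J x -> k < m -> cv x (v_at k x).
Proof.
  intros H L. apply (v_list_ok x H). apply nth_In. rewrite (hom_v_length _ _ _ HJ); auto.
Qed.

Lemma cu_u_at x s : J x -> cu x s -> exists i, i < n /\ u_at i x = s.
Proof.
  intros H C. apply (u_list_ok x H) in C. exists (index_of s (u_list x)). split.
  - rewrite <- (hom_u_length _ _ _ HJ x H). apply index_of_lt; auto.
  - apply nth_index_of; auto.
Qed.

Lemma cv_v_at x a : J x -> cv x a -> index_of a (v_list x) < m /\ v_at (index_of a (v_list x)) x = a.
Proof.
  intros H C. apply (v_list_ok x H) in C. split.
  - rewrite <- (hom_v_length _ _ _ HJ x H). apply index_of_lt; auto.
  - apply nth_index_of; auto.
Qed.

Definition u_root i := exists c, forall x, J x -> u_at i x = c.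
Definition v_root k := exists c, forall x, J x -> v_at k x = c.

Lemma u_fibre_countable i y : i < n -> ~ u_root i -> countable (fun x => J x /\ u_at i x = y).
Proof. intros L N. destruct (hom_u_at _ _ _ HJ i L) as [H|H]; [contradiction|auto]. Qed.

Lemma v_fibre_countable k y : k < m -> ~ v_root k -> countable (fun x => J x /\ v_at k x = y).
Proof. intros L N. destruct (hom_v_at _ _ _ HJ k L) as [H|H]; [contradiction|auto]. Qed.

Lemma u_root_eq i x y : u_root i -> J x -> J y -> u_at i x = u_at i y.
Proof. intros [c H] A B. rewrite (H x A), (H y B); auto. Qed.

Lemma v_root_eq k x y : v_root k -> J x -> J y -> v_at k x = v_at k y.
Proof. intros [c H] A B. rewrite (H x A), (H y B); auto. Qed.

Lemma f_of_spec x s : J x -> cu x s -> cf x s (f_of x s).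
Proof.
  intros H C. apply (epsilon_spec W_inhabited (cf x s)). apply (cf_total _ _ (HJcond x H)); auto.
Qed.

Lemma f_index_spec x i : J x -> i < n -> f_index i x < m /\ v_at (f_index i x) x = f_of x (u_at i x).
Proof.
  intros H L. apply cv_v_at; auto. eapply (cf_dom _ _ (HJcond x H)). apply f_of_spec; auto.
  apply u_at_cu; auto.
Qed.

Lemma colour_code_spec x k : J x -> k < m -> cc x (v_at k x) (colour_code k x).
Proof.
  intros H L. apply (epsilon_spec (inhabits 0) (cc x (v_at k x))).
  apply (cc_total _ _ (HJcond x H)). apply v_at_cv; auto.
Qed.

(* The image of a root node lies on a fixed countable level, and so cannot have countable
   fibres on the uncountable [J]. *)
Lemma f_root_is_root i x : i < n -> u_root i -> J x -> v_root (f_index i x).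
Proof.
  intros L [c Hc] Jx. set (k := f_index i x). apply NNPP. intros N.
  assert (Hk : forall y, J y -> ht_rel lt (v_at k y) (lg c)).
  { intros y Jy. unfold k. rewrite (hom_f_index _ _ _ HJ i x y L Jx Jy).
    destruct (f_index_spec y i Jy L) as [_ E]. rewrite E, (Hc y Jy).
    assert (Cy : cu y c) by (rewrite <- (Hc y Jy); apply u_at_cu; auto).
    eapply (cf_height _ _ (HJcond y Jy)); [apply f_of_spec; auto|].
    apply lg_spec. apply (cu_seq _ _ (HJcond y Jy) c HT Cy). }
  destruct (pigeonhole_countable J (fun a => ht_rel lt a (lg c)) (v_at k) HJunc
              (level_countable (lg c)) Hk) as [a [_ Ha]].
  apply Ha. apply v_fibre_countable; auto. apply f_index_spec; auto.
Qed.

(* Amalgamate along the common enumeration: the [k]-th point of [x] goes to the [k]-th point of [a]. *)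
Lemma compatible_of_apart a x : J a -> J x ->
  (forall j s, j < n -> ~ u_root j -> cu a s -> u_at j x <> s) ->
  (forall k b, k < m -> ~ v_root k -> cv a b -> v_at k x <> b) ->
  (forall i j, i < n -> j < n -> ~ u_root i -> ~ u_root j ->
      ~ prefix (u_at i a) (u_at j x) /\ ~ prefix (u_at j x) (u_at i a)) ->
  compatible lt T a x.
Proof.
  intros Ja Jx D1 D2 C.
  pose proof (HJcond a Ja) as Ca. pose proof (HJcond x Jx) as Cx.
  apply (amalgamation_compatible T HT a x Ca Cx (fun b => v_at (index_of b (v_list x)) a)).
  - intros b Hx Ha. destruct (cv_v_at x b Jx Hx) as [L E].
    destruct (classic (v_root (index_of b (v_list x)))) as [R|R].
    + rewrite (v_root_eq _ a x R Ja Jx). auto.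
    + exfalso. apply (D2 _ b L R Ha E).
  - intros b d H. destruct (clt_cv _ _ Cx _ _ H) as [Hb Hd].
    destruct (cv_v_at x b Jx Hb) as [L1 E1]. destruct (cv_v_at x d Jx Hd) as [L2 E2].
    apply (hom_order _ _ _ HJ _ _ x a L1 L2 Jx Ja). rewrite E1, E2. auto.
  - intros b c H. pose proof (cc_dom _ _ Cx _ _ H) as Hb. destruct (cv_v_at x b Jx Hb) as [L E].
    assert (c = colour_code (index_of b (v_list x)) x).
    { apply (cc_functional _ _ Cx b); auto. rewrite <- E at 1. apply colour_code_spec; auto. }
    subst c. rewrite (hom_colour _ _ _ HJ _ x a L Jx Ja). apply colour_code_spec; auto.
  - intros s b Ha Hx Hf. destruct (cu_u_at x s Jx Hx) as [j [Lj Ej]].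
    destruct (classic (u_root j)) as [R|R]; [|exfalso; apply (D1 j s Lj R Ha Ej)].
    assert (Es : u_at j a = s) by (rewrite (u_root_eq j a x R Ja Jx); auto).
    assert (b = f_of x s) by (eapply (cf_functional _ _ Cx); eauto; apply f_of_spec; auto).
    subst b. destruct (f_index_spec x j Jx Lj) as [L1 E1]. destruct (f_index_spec a j Ja Lj) as [L2 E2].
    pose proof (f_root_is_root j x Lj R Jx) as RV. rewrite (hom_f_index _ _ _ HJ j a x Lj Ja Jx) in E2.
    rewrite (v_root_eq _ a x RV Ja Jx), E1, Ej, Es in E2. rewrite E2. apply f_of_spec; auto.
  - intros s t Has Nxs Hxt Nat. destruct (cu_u_at a s Ja Has) as [i [Li Ei]].
    destruct (cu_u_at x t Jx Hxt) as [j [Lj Ej]]. subst s t.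
    assert (Ri : ~ u_root i).
    { intros R. apply Nxs. rewrite (u_root_eq i a x R Ja Jx). apply u_at_cu; auto. }
    assert (Rj : ~ u_root j).
    { intros R. apply Nat. rewrite (u_root_eq j x a R Jx Ja). apply u_at_cu; auto. }
    apply C; auto.
Qed.

Definition overlaps a x :=
  (exists j s, j < n /\ ~ u_root j /\ cu a s /\ u_at j x = s) \/
  (exists k b, k < m /\ ~ v_root k /\ cv a b /\ v_at k x = b) \/
  (exists i j, i < n /\ j < n /\ ~ u_root i /\ ~ u_root j /\ prefix (u_at j x) (u_at i a)).

Lemma free_u_fibre_countable j y : countable (fun x => J x /\ ~ u_root j /\ j < n /\ u_at j x = y).
Proof.
  destruct (classic (~ u_root j /\ j < n)) as [[R L]|R].
  - apply countable_subset with (A := fun x => J x /\ u_at j x = y); [tauto|].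
    apply u_fibre_countable; auto.
  - apply countable_empty. intros x [_ [N [L _]]]. tauto.
Qed.

Lemma free_v_fibre_countable k y : countable (fun x => J x /\ ~ v_root k /\ k < m /\ v_at k x = y).
Proof.
  destruct (classic (~ v_root k /\ k < m)) as [[R L]|R].
  - apply countable_subset with (A := fun x => J x /\ v_at k x = y); [tauto|].
    apply v_fibre_countable; auto.
  - apply countable_empty. intros x [_ [N [L _]]]. tauto.
Qed.

Lemma overlaps_countable a : J a -> countable (fun x => J x /\ overlaps a x).
Proof.
  intros Ja.
  set (B1 := fun x => exists j, j < n /\ exists s, In s (u_list a) /\
                        (J x /\ ~ u_root j /\ j < n /\ u_at j x = s)).
  set (B2 := fun x => exists k, k < m /\ exists b, In b (v_list a) /\
                        (J x /\ ~ v_root k /\ k < m /\ v_at k x = b)).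
  set (B3 := fun x => exists i, i < n /\ exists j, j < n /\ exists s, (T s /\ prefix s (u_at i a)) /\
                        (J x /\ ~ u_root j /\ j < n /\ u_at j x = s)).
  apply countable_subset with (A := fun x => B1 x \/ (B2 x \/ B3 x)).
  - intros x [Jx [[j [s [L [R [C E]]]]]|[[k [b [L [R [C E]]]]]|[i [j [Li [Lj [Ri [Rj P]]]]]]]]].
    + left. exists j. split; auto. exists s. split; [apply (u_list_ok a Ja); auto|auto].
    + right; left. exists k. split; auto. exists b. split; [apply (v_list_ok a Ja); auto|auto].
    + right; right. exists i. split; auto. exists j. split; auto. exists (u_at j x).
      split; auto. split; auto. apply (cu_tree _ _ (HJcond x Jx)). apply u_at_cu; auto.
  - apply countable_or; [|apply countable_or].
    + apply countable_union_lt. intros j _. apply countable_union_list. intros s _.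
      apply free_u_fibre_countable.
    + apply countable_union_lt. intros k _. apply countable_union_list. intros b _.
      apply free_v_fibre_countable.
    + apply countable_union_lt. intros i Li. apply countable_union_lt. intros j _.
      apply countable_union; [|intros s _; apply free_u_fibre_countable].
      apply tree_prefixes_countable; auto. apply (cu_seq _ _ (HJcond a Ja)); auto. apply u_at_cu; auto.
Qed.

Definition partner a i j x := ~ u_root i /\ ~ u_root j /\ prefix (u_at i a) (u_at j x).

Section Partners.
Hypothesis Hanti : forall a x, J a -> J x -> a <> x -> ~ compatible lt T a x.
Variable U : (cond W -> Prop) -> Prop.
Hypothesis U_cocountable : forall C B, countable C -> (forall x, J x -> ~ C x -> B x) -> U B.
Hypothesis U_and : forall A B, U A -> U B -> U (fun x => A x /\ B x).
Hypothesis U_inhabited : forall A, U A -> exists x, A x.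
Hypothesis U_ultra : forall A, U A \/ U (fun x => ~ A x).

(* Apart from countably many [x], incompatibility with [a] can only come from a free node of [x]
   extending a free node of [a]. *)
Lemma antichain_partner a : J a -> exists i j, i < n /\ j < n /\ U (partner a i j).
Proof.
  intros Ja.
  destruct (ultrafilter_finite_cover U U_and U_inhabited U_ultra (list_prod (seq 0 n) (seq 0 n))
              (fun ij => partner a (fst ij) (snd ij)) (fun x => J x /\ ~ overlaps a x /\ x <> a))
    as [[i j] [Iij Uij]].
  - apply (U_cocountable (fun x => (J x /\ overlaps a x) \/ x = a)).
    + apply countable_or; [apply overlaps_countable; auto|apply countable_singleton].
    + intros x Jx N. split; auto. split; intros X; apply N; auto.
  - intros x [Jx [Nb Nx]]. apply NNPP. intros N. apply (Hanti a x Ja Jx (fun E => Nx (eq_sym E))).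
    apply compatible_of_apart; auto.
    + intros j s Lj Rj Cs E. apply Nb. left. exists j, s. auto.
    + intros k b Lk Rk Cb E. apply Nb. right; left. exists k, b. auto.
    + intros i j Li Lj Ri Rj. split.
      * intros Pr. apply N. exists (i, j). split; [apply in_prod; apply in_seq; lia|].
        unfold partner; simpl; auto.
      * intros Pr. apply Nb. right; right. exists i, j. auto.
  - apply in_prod_iff in Iij. destruct Iij as [Ii Ij]. apply in_seq in Ii, Ij.
    exists i, j. repeat split; [lia|lia|auto].
Qed.

(* Any two [u_at i a] in the class lie below a common [u_at j x], so they form a chain. *)
Lemma partner_class_countable (Hnb : no_uncountable_branch T) i j :
  i < n -> countable (fun a => J a /\ U (partner a i j)).
Proof.
  intros Li. destruct (classic (u_root i)) as [Ri|Ri].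
  { apply countable_empty. intros a [_ Ua]. destruct (U_inhabited _ Ua) as [x [X _]]. auto. }
  set (B := fun s => exists a, (J a /\ U (partner a i j)) /\ u_at i a = s).
  assert (CB : countable B).
  { apply Hnb.
    - intros s [a [[Ja _] E]]. subst. apply (cu_tree _ _ (HJcond a Ja)). apply u_at_cu; auto.
    - intros s t [a [[Ja Ua] Ea]] [b [[Jb Ub] Eb]]. subst.
      destruct (U_inhabited _ (U_and _ _ Ua Ub)) as [x [[_ [_ P1]] [_ [_ P2]]]].
      apply (prefix_comparable _ _ _ (cu_seq _ _ (HJcond a Ja) _ HT (u_at_cu a i Ja Li))
               (cu_seq _ _ (HJcond b Jb) _ HT (u_at_cu b i Jb Li)) P1 P2). }
  apply countable_subset with (A := fun x => exists s, B s /\ (J x /\ u_at i x = s)).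
  - intros x Kx. exists (u_at i x). split; [exists x; auto|]. split; auto. apply Kx.
  - apply countable_union; auto. intros s _. apply u_fibre_countable; auto.
Qed.

End Partners.

Lemma homogeneous_not_antichain :
  no_uncountable_branch T -> exists a x, J a /\ J x /\ a <> x /\ compatible lt T a x.
Proof.
  intros Hnb. apply NNPP. intros N.
  assert (Hanti : forall a x, J a -> J x -> a <> x -> ~ compatible lt T a x).
  { intros a x Ja Jx Nax C. apply N. exists a, x. auto. }
  set (F := fun B : cond W -> Prop => exists C, countable C /\ forall x, J x -> ~ C x -> B x).
  destruct (Ultrafilter.extend (cond W) F) as [U [UF [UI [UE UC]]]].
  - exists (fun _ => False). split; [apply countable_empty; auto|auto].
  - intros A1 A2 [C1 [H1 K1]] [C2 [H2 K2]]. exists (fun x => C1 x \/ C2 x).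
    split; [apply countable_or; auto|]. intros x Jx Nx. split; [apply K1|apply K2]; auto.
  - intros A1 A2 S [C [H K]]. exists C. split; auto.
  - intros A1 [C [H K]].
    destruct (uncountable_inhabited _ (uncountable_diff J C HJunc H)) as [x [Jx Nx]]. eauto.
  - assert (Ucocountable : forall C B, countable C -> (forall x, J x -> ~ C x -> B x) -> U B).
    { intros C B HC HB. apply UF. exists C. auto. }
    apply HJunc.
    apply countable_subset with
      (A := fun a => exists i, i < n /\ exists j, j < n /\ (J a /\ U (partner a i j))).
    + intros a Ja.
      destruct (antichain_partner Hanti U Ucocountable UI UE UC a Ja) as [i [j [Li [Lj Ua]]]].
      exists i. split; auto. exists j. auto.
    + apply countable_union_lt. intros i Li. apply countable_union_lt. intros j _.
      apply (partner_class_countable U UI UE Hnb); auto.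
Qed.

End Homogeneous.
End Omega1.

Theorem lemma5p7 (W : Type) (lt : W -> W -> Prop) (Hw : is_omega1 lt)
  (T : sq W -> Prop) (HT : is_tree lt T) (Hcard : @card_aleph1 W T)
  (Hnb : @no_uncountable_branch W T) :
  ccc lt T.
Proof.
  intros A HA Hanti. apply NNPP. intros HAunc.
  destruct (homogeneous_refinement W lt Hw T A HA HAunc) as [J [n [m [JA [HJunc HJ]]]]].
  destruct (homogeneous_not_antichain W lt Hw T HT J n m (fun x Jx => HA x (JA x Jx)) HJ HJunc Hnb)
    as [a [x [Ja [Jx [Nax Cax]]]]].
  exact (Hanti a x (JA a Ja) (JA x Jx) Nax Cax).
Qed.
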